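(* Assume $\delta>d$, $\alpha=\gamma/(\delta-d)$, and that $f$ is not a polynomial product. Then for every $\epsilon>0$ there is $R>0$ such that $$\big|G_z^\alpha(w)-G_h(z^{-\alpha}w)\big|<\epsilon\quad\text{for all } (z,w) \text{ with } |z|>R,$$ i.e. $G_z^\alpha(w)=G_h(z^{-\alpha}w)+o(1)$ as $z\to\infty$, uniformly in $w$.
   Context: Let $p(z)=z^\delta+O(z^{\delta-1})$ be a monic polynomial of degree $\delta\ge 2$, and let $q(z,w)=b(z)w^d+(\text{terms of lower degree in } w)$ be a polynomial with $d=\deg_w q\ge 2$, where $b$ is a monic polynomial of degree $\gamma\ge 0$. Let $f(z,w)=(p(z),q(z,w))$; $f$ is a polynomial product if $q$ does not depend on $z$. Write $Q_z^n=q_{p^{n-1}(z)}\circ\cdots\circ q_{p(z)}\circ q_z$ with $q_z=q(z,\cdot)$. For $\delta>d$, $\alpha=\max\{n_j/(\delta-m_j)\}$ over monomials $z^{n_j}w^{m_j}$ appearing in $q$ with nonzero coefficient. $G_z^\alpha(w)=\lim_{n\to\infty}d^{-n}\log^+\big(|Q_z^n(w)|/|p^n(z)|^\alpha\big)$ (defined for $z$ with $p^n(z)\to\infty$). Give the monomial $z^nw^m$ weight $n+\alpha m$; let $h(z,w)$ be the sum of those terms of $q$ of weight exactly $\alpha\delta$ (the maximal weight; it contains $z^\gamma w^d$), and let $h(c)=h(1,c)$, a one-variable polynomial of degree $d$. $G_h(c)=\lim_{n\to\infty}d^{-n}\log^+|h^n(c)|$ is its Green function. The value $G_h(z^{-\alpha}w)$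 does not depend on the choice of branch of $z^{-\alpha}$. *)

From Stdlib Require Import Reals Lra ClassicalEpsilon.
Open Scope R_scope.

Definition Cx : Type := (R * R)%type.
Definition Cx0 : Cx := (0, 0).
Definition Cx1 : Cx := (1, 0).
Definition Cadd (a b : Cx) : Cx := (fst a + fst b, snd a + snd b).
Definition Cmul (a b : Cx) : Cx :=
  (fst a * fst b - snd a * snd b, fst a * snd b + snd a * fst b).
Fixpoint Cpow (a : Cx) (n : nat) : Cx :=
  match n with O => Cx1 | S k => Cmul a (Cpow a k) end.
Definition Cnorm (a : Cx) : R := sqrt (fst a * fst a + snd a * snd a).

Fixpoint csum (f : nat -> Cx) (n : nat) : Cx :=
  match n with O => f O | S k => Cadd (csum f k) (f (S k)) end.

Definition poly1_eval (deg : nat) (pc : nat -> Cx) (z : Cx) : Cx :=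
  csum (fun k => Cmul (pc k) (Cpow z k)) deg.

Definition poly2_eval (N d : nat) (qc : nat -> nat -> Cx) (z w : Cx) : Cx :=
  csum (fun n => csum (fun m => Cmul (qc n m) (Cmul (Cpow z n) (Cpow w m))) d) N.

Definition lim_seq (u : nat -> R) : R :=
  epsilon (inhabits 0) (fun L => Un_cv u L).

Definition logplus (x : R) : R := Rmax 0 (ln x).

Fixpoint skew_iter (delta N d : nat) (pc : nat -> Cx) (qc : nat -> nat -> Cx)
  (n : nat) (z w : Cx) : Cx * Cx :=
  match n with
  | O => (z, w)
  | S k => let zw := skew_iter delta N d pc qc k z w in
           (poly1_eval delta pc (fst zw), poly2_eval N d qc (fst zw) (snd zw))
  end.

Definition G_alpha (delta N d : nat) (pc : nat -> Cx) (qc : nat -> nat -> Cx)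
  (alpha : R) (z w : Cx) : R :=
  lim_seq (fun n =>
    let zw := skew_iter delta N d pc qc n z w in
    / (INR d ^ n) * logplus (Cnorm (snd zw) / Rpower (Cnorm (fst zw)) alpha)).

(* h: sum of the terms of q of weight n + alpha m exactly alpha*delta, at z = 1:
   h(c) = sum_m hcoef m c^m *)
Definition h_coef (delta N : nat) (qc : nat -> nat -> Cx) (alpha : R) (m : nat) : Cx :=
  csum (fun n => if Req_EM_T (INR n + alpha * INR m) (alpha * INR delta)
                 then qc n m else Cx0) N.

Definition h_eval (delta N d : nat) (qc : nat -> nat -> Cx) (alpha : R) (c : Cx) : Cx :=
  poly1_eval d (h_coef delta N qc alpha) c.

Definition G_h (delta N d : nat) (qc : nat -> nat -> Cx) (alpha : R) (c : Cx) : R :=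
  lim_seq (fun n =>
    / (INR d ^ n) * logplus (Cnorm (Nat.iter n (h_eval delta N d qc alpha) c))).

(* the branch of z^{-alpha} attached to an argument theta of z *)
Definition zpow_branch (alpha : R) (z : Cx) (theta : R) : Cx :=
  (Rpower (Cnorm z) (- alpha) * cos (- alpha * theta),
   Rpower (Cnorm z) (- alpha) * sin (- alpha * theta)).

Definition is_arg (z : Cx) (theta : R) : Prop :=
  z = (Cnorm z * cos theta, Cnorm z * sin theta).

(* Put zeta_n = a branch of Z_n^(-alpha) along the base orbit Z_n = p^n(z)
   (starting from the given branch of z^(-alpha)) and v_n = zeta_n W_n, where
   W_n = Q^n_z(w).  Then |v_n| = |W_n| / |Z_n|^alpha, so G^alpha_z(w) is the escape
   rate lim d^-n log^+ |v_n|, and one step of the dynamics reads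
   v_(n+1) = h(v_n) + (terms that vanish as |z| -> oo): monomials of q of weight
   alpha delta give h (up to factors that tend to 1), all others are damped by a
   negative power of |Z_n|.  Both v_n and the h-orbit satisfy
   log^+|x_(n+1)| = d log^+|x_n| + O(1), so d^-n log^+ converges at rate O(d^-n).
   Given eps, fix k with rate error < eps/4.  If |v_0| is large, both Green
   functions are ln|v_0| + O(1/|v_0|); otherwise v_0 lies in a fixed disc, the
   first k steps of v shadow the h-orbit of v_0 once |z| is large, and log^+ is
   1-Lipschitz. *)

From Pilot Require Import Defs.
From Stdlib Require Import Reals Lra Lia ZArith ClassicalEpsilon FunctionalExtensionality.
From Coquelicot Require Import Coquelicot.
Open Scope R_scope.

Lemma logplus_le1 x : x <= 1 -> logplus x = 0.
Proof.
  intros Hx. unfold logplus. apply Rmax_left.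
  destruct (Rle_dec x 0) as [Hx0|Hx0].
  - unfold ln. destruct (Rlt_dec 0 x); [exfalso; lra|apply Rle_refl].
  - rewrite <- ln_1. apply ln_le; lra.
Qed.

Lemma logplus_ge1 x : 1 <= x -> logplus x = ln x.
Proof.
  intros Hx. unfold logplus. apply Rmax_right. rewrite <- ln_1. apply ln_le; lra.
Qed.

Lemma logplus_nonneg x : 0 <= logplus x.
Proof. apply Rmax_l. Qed.

Lemma logplus_mono x y : x <= y -> logplus x <= logplus y.
Proof.
  intros H. destruct (Rle_dec x 1).
  - rewrite logplus_le1 by lra. apply logplus_nonneg.
  - rewrite !logplus_ge1 by lra. apply ln_le; lra.
Qed.

Lemma ln_le_xm1 x : 0 < x -> ln x <= x - 1.
Proof. intros Hx. pose proof (exp_ineq1_le (ln x)). rewrite exp_ln in H by lra. lra. Qed.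

(* log^+ is 1-Lipschitz on [0, +oo): this turns closeness of two orbits
   into closeness of their escape rates. *)
Lemma logplus_lipschitz x y : 0 <= x -> 0 <= y ->
  Rabs (logplus x - logplus y) <= Rabs (x - y).
Proof.
  assert (K : forall a b, 0 <= a -> a <= b -> Rabs (logplus b - logplus a) <= b - a).
  { intros a b Ha Hab. destruct (Rle_dec b 1).
    - rewrite !logplus_le1 by lra. rewrite Rminus_diag, Rabs_R0. lra.
    - rewrite (logplus_ge1 b) by lra. destruct (Rle_dec a 1).
      + rewrite logplus_le1 by lra. pose proof (ln_le_xm1 b).
        assert (0 <= ln b) by (rewrite <- ln_1; apply ln_le; lra).
        rewrite Rabs_right; lra.
      + rewrite logplus_ge1 by lra.
        assert (Hq : ln b - ln a = ln (b / a)).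
        { unfold Rdiv. rewrite ln_mult, ln_Rinv; try lra. apply Rinv_0_lt_compat; lra. }
        assert (b / a <= 1 + (b - a)).
        { apply Rmult_le_reg_r with a; [lra|]. unfold Rdiv.
          rewrite Rmult_assoc, Rinv_l by lra. nra. }
        pose proof (ln_le_xm1 (b / a) ltac:(apply Rdiv_lt_0_compat; lra)).
        assert (ln a <= ln b) by (apply ln_le; lra).
        rewrite Rabs_right; lra. }
  intros Hx Hy. destruct (Rle_dec x y).
  - rewrite Rabs_minus_sym, (Rabs_left1 (x - y)) by lra. specialize (K x y Hx r). lra.
  - rewrite (Rabs_right (x - y)) by lra. apply K; lra.
Qed.

Lemma exp_mono x y : x <= y -> exp x <= exp y.
Proof.
  intros H. destruct (Req_dec x y) as [->|Hne]; [lra|]. left. apply exp_increasing. lra.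
Qed.

Lemma exp_half_le2 : exp (1/2) <= 2.
Proof.
  assert (exp (1/2) * exp (1/2) = exp 1) by (rewrite <- exp_plus; f_equal; lra).
  pose proof exp_le_3. pose proof (exp_pos (1/2)). nra.
Qed.

Lemma ln_small_bounds s : 0 < s -> Rabs (ln s) <= 1/2 -> 1/2 <= s <= 2.
Proof.
  intros Hs H. apply Rabs_le_between in H. pose proof exp_half_le2.
  pose proof (exp_pos (1/2)).
  assert (Hinv : exp (-(1/2)) * exp (1/2) = 1) by (rewrite <- exp_plus, <- exp_0; f_equal; lra).
  rewrite <- (exp_ln s) by lra. split.
  - assert (exp (-(1/2)) <= exp (ln s)) by (apply exp_mono; lra). nra.
  - assert (exp (ln s) <= exp (1/2)) by (apply exp_mono; lra). lra.
Qed.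

Lemma ln_1p_bound t : Rabs t <= 1/2 -> Rabs (ln (1 + t)) <= 2 * Rabs t.
Proof.
  intros H. apply Rabs_le_between in H as [H1 H2]. apply Rabs_le_between.
  pose proof (ln_le_xm1 (1 + t) ltac:(lra)). pose proof (Rle_abs t). pose proof (Rabs_pos t). split; [|lra].
  destruct (Rle_dec 0 t).
  - assert (0 <= ln (1 + t)) by (rewrite <- ln_1; apply ln_le; lra).
    rewrite Rabs_right; lra.
  - rewrite Rabs_left by lra.
    (* [exp (2t) <= 1 + t], from [exp (-2t) >= 1 - 2t] *)
    assert (E : exp (-(2 * t)) * exp (2 * t) = 1) by (rewrite <- exp_plus, <- exp_0; f_equal; lra).
    pose proof (exp_ineq1_le (-(2 * t))). pose proof (exp_pos (2 * t)).
    assert (exp (2 * t) <= 1 + t) by nra.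
    assert (ln (exp (2 * t)) <= ln (1 + t)) by (apply ln_le; lra).
    rewrite ln_exp in *. lra.
Qed.

Lemma exp_m1_bound x : Rabs x <= 1/2 -> Rabs (exp x - 1) <= 2 * Rabs x.
Proof.
  intros H. apply Rabs_le_between in H as [H1 H2]. apply Rabs_le_between.
  pose proof (exp_ineq1_le x). pose proof (exp_ineq1_le (-x)).
  assert (E : exp (-x) * exp x = 1) by (rewrite <- exp_plus, <- exp_0; f_equal; lra).
  pose proof (exp_pos x). pose proof (exp_pos (-x)).
  assert ((1 - x) * exp x <= 1) by nra.
  destruct (Rle_dec 0 x); [rewrite Rabs_right by lra | rewrite Rabs_left by lra]; split; nra.
Qed.

(* Real powers of any base are positive (by definition [Rpower X a = exp (a ln X)]). *)
Lemma Rpower_pos X a : 0 < Rpower X a.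
Proof. apply exp_pos. Qed.

Lemma pow_le_Rmax1 x a b : 0 <= x -> (a <= b)%nat -> x ^ a <= Rmax 1 x ^ b.
Proof.
  intros Hx Hab. apply Rle_trans with (Rmax 1 x ^ a).
  - apply pow_incr. split; [auto|apply Rmax_r].
  - apply Rle_pow; [apply Rmax_l|auto].
Qed.

Lemma Rpower_small e eps : e < 0 -> 0 < eps ->
  exists R, 1 <= R /\ forall X, R <= X -> Rpower X e <= eps.
Proof.
  intros He Heps. set (R := exp (Rabs (ln eps / e))).
  assert (HR : 1 <= R) by (unfold R; rewrite <- exp_0; apply exp_mono, Rabs_pos).
  exists R. split; [exact HR|]. intros X HX.
  assert (Hl : Rabs (ln eps / e) <= ln X) by (rewrite <- (ln_exp (Rabs _)); apply ln_le; [apply exp_pos|exact HX]).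
  pose proof (Rle_abs (ln eps / e)).
  assert (e * ln X <= ln eps).
  { apply Rmult_le_reg_r with (- / e). { apply Ropp_0_gt_lt_contravar, Rinv_lt_0_compat; lra. }
    replace (ln eps * - / e) with (- (ln eps / e)) by (unfold Rdiv; ring).
    replace (e * ln X * - / e) with (- ln X) by (field; lra). lra. }
  unfold Rpower. rewrite <- (exp_ln eps) by lra. apply exp_mono. lra.
Qed.

Lemma eventually_small_ratio c t : 0 <= c -> 0 < t ->
  exists R, 0 < R /\ forall x, R <= x -> c / x <= t.
Proof.
  intros Hc Ht. assert (Hct : 0 <= c / t) by (apply Rdiv_le_0_compat; lra).
  exists (c / t + 1). split; [lra|]. intros x Hx.
  apply Rmult_le_reg_r with x; [lra|]. unfold Rdiv in *.
  rewrite Rmult_assoc, Rinv_l, Rmult_1_r by lra.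
  assert (c = t * (c * / t)) by (field; lra). nra.
Qed.

Lemma common_threshold (P : nat -> R -> Prop) n :
  (forall i R R', R <= R' -> P i R -> P i R') ->
  (forall i, (i <= n)%nat -> exists R, P i R) -> exists R, forall i, (i <= n)%nat -> P i R.
Proof.
  intros Hm H. induction n.
  - destruct (H 0%nat ltac:(lia)) as [R HR]. exists R. intros i Hi.
    replace i with 0%nat by lia. exact HR.
  - destruct IHn as [R1 HR1]; [intros i Hi; apply H; lia|].
    destruct (H (S n) ltac:(lia)) as [R2 HR2].
    exists (Rmax R1 R2). intros i Hi. destruct (Nat.eq_dec i (S n)) as [->|Hne].
    + eapply Hm; [apply Rmax_r|exact HR2].
    + eapply Hm; [apply Rmax_l|]. apply HR1. lia.
Qed.

(** ** One step of logarithmic growth *)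

(* Both the renormalised skew-product orbit and the orbit of [h] satisfy this. *)
Definition almost_power (d : nat) (A e s x y : R) : Prop :=
  Rabs (s * y - x ^ d) <= A * Rmax 1 x ^ (d - 1) + e * Rmax 1 x ^ d.

Lemma log_step_escaping (d : nat) A x y s e :
  (2 <= d)%nat -> 1 <= A -> 0 <= y -> 0 < s -> Rabs (ln s) <= 1/2 -> 0 <= e <= 1/4 ->
  8 * A <= x -> almost_power d A e s x y ->
  2 * x <= y /\ Rabs (ln y - INR d * ln x) <= 2 * A / x + 2 * e + Rabs (ln s).
Proof.
  unfold almost_power. intros Hd HA Hy Hs Hls He Hx H.
  rewrite Rmax_right in H by lra.
  assert (Hxd : 0 < x ^ d) by (apply pow_lt; lra).
  assert (Hxd1 : x ^ d = x ^ (d - 1) * x) by (replace d with (S (d - 1)) at 1 by lia; simpl; ring).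
  assert (Hxx : x * x <= x ^ d) by (replace (x * x) with (x ^ 2) by ring; apply Rle_pow; lia || lra).
  set (t := (s * y - x ^ d) / x ^ d).
  assert (Ht : Rabs t <= A / x + e).
  { unfold t, Rdiv. rewrite Rabs_mult, Rabs_inv, (Rabs_right (x ^ d)) by lra.
    apply Rmult_le_reg_r with (x ^ d); [lra|]. rewrite Rmult_assoc, Rinv_l by lra.
    replace ((A * / x + e) * x ^ d) with (A * x ^ (d - 1) + e * x ^ d) by (rewrite Hxd1; field; lra).
    lra. }
  assert (A / x <= 1/8) by (apply Rmult_le_reg_r with x; unfold Rdiv; [lra|];
                            rewrite Rmult_assoc, Rinv_l by lra; lra).
  assert (Ht2 : Rabs t <= 1/2) by lra.
  pose proof (ln_small_bounds s Hs Hls) as [Hs1 Hs2].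
  pose proof (proj1 (Rabs_le_between _ _) Ht2) as [Ht3 Ht4].
  assert (Hy' : y = x ^ d * (1 + t) / s) by (unfold t; field; lra).
  split.
  - assert (s * y >= 4 * x) by (rewrite Hy'; field_simplify; nra). nra.
  - rewrite Hy'. unfold Rdiv.
    rewrite ln_mult, ln_mult, ln_Rinv, ln_pow by (try apply Rinv_0_lt_compat; try apply Rmult_lt_0_compat; lra).
    replace (INR d * ln x + ln (1 + t) + - ln s - INR d * ln x) with (ln (1 + t) + - ln s) by ring.
    eapply Rle_trans; [apply Rabs_triang|]. rewrite Rabs_Ropp.
    pose proof (ln_1p_bound t Ht2). unfold Rdiv in Ht. lra.
Qed.

(* Uniformly in [x]: [log^+ y = d log^+ x + O(1)], the estimate behind the
   existence of the Green functions. *)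
Lemma log_step (d : nat) A x y s e :
  (2 <= d)%nat -> 1 <= A -> 0 <= x -> 0 <= y -> 0 < s -> Rabs (ln s) <= 1/2 -> 0 <= e <= 1/4 ->
  almost_power d A e s x y ->
  Rabs (logplus y - INR d * logplus x) <= INR d * ln (8 * A) + 2.
Proof.
  intros Hd HA Hx Hy Hs Hls He H.
  assert (HdR : 2 <= INR d) by (apply (le_INR 2); lia).
  assert (H8A : 0 <= ln (8 * A)) by (rewrite <- ln_1; apply ln_le; lra).
  pose proof (logplus_nonneg x). pose proof (logplus_nonneg y).
  assert (Upper : logplus y <= ln (8 * A) + INR d * logplus x).
  { destruct (Rle_dec y 1); [rewrite logplus_le1 by lra; nra|].
    unfold almost_power in H. set (X := Rmax 1 x) in H. assert (HX1 : 1 <= X) by apply Rmax_l.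
    assert (HxX : x ^ d <= X ^ d) by (apply pow_incr; split; [lra|apply Rmax_r]).
    assert (X ^ (d - 1) <= X ^ d) by (apply Rle_pow; lia || lra).
    assert (1 <= X ^ d) by (apply pow_R1_Rle; lra).
    pose proof (ln_small_bounds s Hs Hls) as [Hs1 Hs2].
    apply Rabs_le_between in H as [_ H].
    assert (Hy8 : y <= 8 * A * X ^ d).
    { assert (A * X ^ (d - 1) <= A * X ^ d) by (apply Rmult_le_compat_l; lra).
      assert (e * X ^ d <= 1/4 * X ^ d) by (apply Rmult_le_compat_r; lra).
      assert (X ^ d <= A * X ^ d) by nra.
      assert (s * y <= 9/4 * A * X ^ d) by lra.
      assert (0 <= (s - 1/2) * y) by (apply Rmult_le_pos; lra). nra. }
    apply (ln_le y) in Hy8; [|lra].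
    rewrite ln_mult, ln_pow in Hy8 by (try apply pow_lt; lra).
    rewrite logplus_ge1 by lra.
    replace (ln X) with (logplus x) in Hy8 by (unfold X, Rmax; destruct (Rle_dec 1 x);
      [apply logplus_ge1; lra | rewrite ln_1; apply logplus_le1; lra]).
    lra. }
  assert (Lower : INR d * logplus x <= logplus y + INR d * ln (8 * A) + 2).
  { destruct (Rle_dec x (8 * A)).
    - assert (logplus x <= ln (8 * A)) by (rewrite <- (logplus_ge1 (8 * A)) by lra; apply logplus_mono; lra).
      nra.
    - destruct (log_step_escaping d A x y s e) as [G1 G2]; try lra; auto.
      rewrite !logplus_ge1 by lra. apply Rabs_le_between in G2 as [G3 _].
      assert (2 * A / x <= 1/4) by (apply Rmult_le_reg_r with x; unfold Rdiv; [lra|];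
                                    rewrite Rmult_assoc, Rinv_l by lra; lra).
      pose proof (Rabs_pos (ln s)). assert (0 <= INR d * ln (8 * A)) by nra. lra. }
  apply Rabs_le_between. nra.
Qed.

Lemma lim_seq_eq u L : Un_cv u L -> lim_seq u = L.
Proof.
  intros H. unfold lim_seq.
  pose proof (epsilon_spec (inhabits 0) (fun L => Un_cv u L) (ex_intro _ L H)) as H2.
  eapply UL_sequence; eauto.
Qed.

Lemma limit_bound u L c B n0 : Un_cv u L ->
  (forall m, (n0 <= m)%nat -> Rabs (u m - c) <= B) -> Rabs (L - c) <= B.
Proof.
  intros Hcv Hb. destruct (Rle_dec (Rabs (L - c)) B) as [|Hn]; [assumption|exfalso].
  destruct (Hcv (Rabs (L - c) - B) ltac:(lra)) as [N HN].
  specialize (HN (max N n0) ltac:(lia)). specialize (Hb (max N n0) ltac:(lia)).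
  unfold R_dist in HN. rewrite Rabs_minus_sym in HN.
  pose proof (Rabs_triang (L - u (max N n0)) (u (max N n0) - c)).
  replace (L - u (max N n0) + (u (max N n0) - c)) with (L - c) in H by ring. lra.
Qed.

Lemma pow_ge_succ (r : R) n : 2 <= r -> INR n + 1 <= r ^ n.
Proof.
  intros Hr. induction n; [simpl; lra|].
  rewrite S_INR. simpl pow. assert (1 <= r ^ n) by (apply pow_R1_Rle; lra). nra.
Qed.

Lemma geometric_small K (r t : R) : 2 <= r -> 0 <= K -> 0 < t -> exists k, K / r ^ k <= t.
Proof.
  intros Hr HK Ht. destruct (archimed (K / t)) as [Ha _].
  assert (Hkt : 0 <= K / t) by (apply Rdiv_le_0_compat; lra).
  exists (Z.to_nat (up (K / t))).
  assert (Hk : K / t <= INR (Z.to_nat (up (K / t))))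
    by (rewrite INR_IZR_INZ, Z2Nat.id; [lra| apply le_IZR; lra]).
  pose proof (pow_ge_succ r (Z.to_nat (up (K / t))) Hr).
  apply Rmult_le_reg_r with (r ^ Z.to_nat (up (K / t))); [apply pow_lt; lra|].
  unfold Rdiv in *. rewrite Rmult_assoc, Rinv_l, Rmult_1_r by (apply pow_nonzero; lra).
  assert (K = t * (K * / t)) by (field; lra). nra.
Qed.

Lemma geometric_increments (a : nat -> R) K r : 2 <= r -> 0 <= K ->
  (forall n, Rabs (a (S n) - a n) <= K / r ^ S n) ->
  forall n p, Rabs (a (n + p)%nat - a n) <= K / r ^ n.
Proof.
  intros Hr HK H n p.
  assert (Hpos : forall k, 0 < r ^ k) by (intros; apply pow_lt; lra).
  assert (Tel : Rabs (a (n + p)%nat - a n) <= K * (/ r ^ n - / r ^ (n + p)) / (r - 1)).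
  { induction p.
    - rewrite Nat.add_0_r, !Rminus_diag, Rabs_R0. unfold Rdiv. lra.
    - replace (n + S p)%nat with (S (n + p)) by lia.
      pose proof (Rabs_triang (a (S (n + p)) - a (n + p)%nat) (a (n + p)%nat - a n)).
      replace (a (S (n + p)) - a (n + p)%nat + (a (n + p)%nat - a n)) with (a (S (n + p)) - a n) in H0 by ring.
      specialize (H (n + p)%nat).
      replace (K * (/ r ^ n - / r ^ S (n + p)) / (r - 1))
        with (K * (/ r ^ n - / r ^ (n + p)) / (r - 1) + K / r ^ S (n + p))
        by (simpl; field; pose proof (Hpos (n + p)%nat); pose proof (Hpos n); repeat split; lra).
      lra. }
  eapply Rle_trans; [exact Tel|]. unfold Rdiv.
  pose proof (Rinv_0_lt_compat _ (Hpos (n + p)%nat)). pose proof (Rinv_0_lt_compat _ (Hpos n)).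
  assert (0 < / (r - 1) <= 1) by (split; [apply Rinv_0_lt_compat; lra|
                                          rewrite <- Rinv_1; apply Rinv_le_contravar; lra]).
  assert (/ r ^ (n + p) <= / r ^ n) by (apply Rinv_le_contravar; [auto|apply Rle_pow; lia || lra]).
  assert (0 <= K * (/ r ^ n - / r ^ (n + p))) by nra.
  assert (K * (/ r ^ n - / r ^ (n + p)) <= K * / r ^ n) by nra.
  assert (K * (/ r ^ n - / r ^ (n + p)) * / (r - 1) <= K * (/ r ^ n - / r ^ (n + p))) by nra.
  lra.
Qed.

Lemma geometric_limit (a : nat -> R) K r : 2 <= r -> 0 <= K ->
  (forall n, Rabs (a (S n) - a n) <= K / r ^ S n) ->
  exists L, Un_cv a L /\ forall n, Rabs (L - a n) <= K / r ^ n.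
Proof.
  intros Hr HK H. pose proof (geometric_increments a K r Hr HK H) as Inc.
  assert (Cau : Cauchy_crit a).
  { intros eps Heps. destruct (geometric_small K r (eps / 2) Hr HK ltac:(lra)) as [k Hk].
    exists k. intros n m Hn Hm. unfold R_dist.
    assert (Hkn : forall j, (k <= j)%nat -> K / r ^ j <= eps / 2).
    { intros j Hj. eapply Rle_trans; [|exact Hk]. unfold Rdiv. apply Rmult_le_compat_l; [lra|].
      apply Rinv_le_contravar; [apply pow_lt; lra|]. apply Rle_pow; lia || lra. }
    destruct (le_dec n m).
    - replace m with (n + (m - n))%nat by lia. rewrite Rabs_minus_sym.
      eapply Rle_lt_trans; [apply Inc|]. specialize (Hkn n Hn). lra.
    - replace n with (m + (n - m))%nat by lia.
      eapply Rle_lt_trans; [apply Inc|]. specialize (Hkn m Hm). lra. }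
  destruct (Rcomplete.R_complete a Cau) as [L HL]. exists L. split; [exact HL|].
  intros n. apply (limit_bound a L (a n) _ n HL). intros m Hm.
  replace m with (n + (m - n))%nat by lia. apply Inc.
Qed.

Lemma renormalised_limit (t : nat -> R) (d : nat) C : (2 <= d)%nat -> 0 <= C ->
  (forall n, Rabs (t (S n) - INR d * t n) <= C) ->
  exists L, Un_cv (fun n => / (INR d ^ n) * t n) L /\
            forall n, Rabs (L - / (INR d ^ n) * t n) <= C / INR d ^ n.
Proof.
  intros Hd HC H. assert (HdR : 2 <= INR d) by (apply (le_INR 2); lia).
  apply geometric_limit; auto. intros n.
  assert (0 < INR d ^ S n) by (apply pow_lt; lra).
  replace (/ INR d ^ S n * t (S n) - / INR d ^ n * t n) with ((t (S n) - INR d * t n) / INR d ^ S n)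
    by (simpl; field; split; [apply pow_nonzero|]; lra).
  unfold Rdiv. rewrite Rabs_mult, (Rabs_right (/ _)) by (left; apply Rinv_0_lt_compat; lra).
  apply Rmult_le_compat_r; [left; apply Rinv_0_lt_compat; lra| apply H].
Qed.

Lemma escaping_rate (x : nat -> R) A M tau (d : nat) :
  (2 <= d)%nat -> 1 <= A -> 8 * A <= M -> 0 <= tau -> M <= x 0%nat ->
  (forall n, 8 * A <= x n ->
     2 * x n <= x (S n) /\ Rabs (ln (x (S n)) - INR d * ln (x n)) <= 2 * A / x n + tau) ->
  forall n, M <= x n /\ Rabs (/ INR d ^ n * ln (x n) - ln (x 0%nat)) <= 2 * A / M + tau.
Proof.
  intros Hd HA HM Ht Hx0 H. assert (HdR : 2 <= INR d) by (apply (le_INR 2); lia).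
  assert (Hge : forall n, M <= x n) by (induction n; [auto|destruct (H n); lra]).
  assert (HAM : 0 <= 2 * A / M) by (apply Rdiv_le_0_compat; lra).
  set (a := fun n => / INR d ^ n * ln (x n)).
  assert (Step : forall k, Rabs (a (S k) - a k) <= (2 * A / M + tau) / INR d ^ S k).
  { intros k. specialize (Hge k). destruct (H k ltac:(lra)) as [_ Hk]. unfold a.
    assert (Hp : 0 < INR d ^ S k) by (apply pow_lt; lra).
    replace (/ INR d ^ S k * ln (x (S k)) - / INR d ^ k * ln (x k))
      with ((ln (x (S k)) - INR d * ln (x k)) / INR d ^ S k)
      by (simpl; field; split; [apply pow_nonzero|]; lra).
    unfold Rdiv. rewrite Rabs_mult, (Rabs_right (/ _)) by (left; apply Rinv_0_lt_compat; lra).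
    apply Rmult_le_compat_r; [left; apply Rinv_0_lt_compat; lra|].
    assert (2 * A / x k <= 2 * A / M) by (apply Rmult_le_compat_l; [lra|apply Rinv_le_contravar; lra]).
    unfold Rdiv in *. lra. }
  intros n. split; [auto|].
  pose proof (geometric_increments a (2 * A / M + tau) (INR d) HdR ltac:(lra) Step 0%nat n) as Inc.
  unfold a in Inc. simpl in Inc. rewrite Rdiv_1_r, Rinv_1, Rmult_1_l in Inc. exact Inc.
Qed.

Lemma Cnorm_Cmod x : Cnorm x = Cmod x.
Proof. unfold Cnorm, Cmod. f_equal. simpl. ring. Qed.

Lemma Cpow_eq a n : Defs.Cpow a n = (a ^ n)%C.
Proof. induction n; simpl; [reflexivity| rewrite IHn; reflexivity]. Qed.

Ltac cpow_fix := repeat match goal with |- context[Defs.Cpow ?a ?k] => rewrite (Cpow_eq a k) end.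

(* [ring] in [C], treating finite sums [csum f n] as opaque atoms. *)
Ltac cring :=
  repeat match goal with |- context[csum ?f ?n] =>
    let x := fresh "cs" in set (x := csum f n); clearbody x end;
  match goal with |- @eq _ ?a ?b => change (@eq C a b); ring end.

Lemma csum_bound (f : nat -> C) n : Cmod (csum f n) <= sum_f_R0 (fun k => Cmod (f k)) n.
Proof.
  induction n; simpl; [lra|].
  change Cadd with Cplus. eapply Rle_trans; [apply Cmod_triangle|lra].
Qed.

Lemma csum_ext (f g : nat -> C) n : (forall k, (k <= n)%nat -> f k = g k) -> csum f n = csum g n.
Proof.
  induction n; intros H; simpl; [apply H; lia|].
  rewrite IHn, H by (try intros; lia || (apply H; lia)). reflexivity.
Qed.

Lemma csum_plus (f g : nat -> C) n : csum (fun k => f k + g k)%C n = (csum f n + csum g n)%C.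
Proof. induction n; simpl; [reflexivity|]. change Cadd with Cplus; rewrite IHn. cring. Qed.

Lemma csum_minus (f g : nat -> C) n : csum (fun k => f k - g k)%C n = (csum f n - csum g n)%C.
Proof. induction n; simpl; [reflexivity|]. change Cadd with Cplus; rewrite IHn. cring. Qed.

Lemma csum_mul_l (c : C) (f : nat -> C) n : (c * csum f n)%C = csum (fun k => c * f k)%C n.
Proof. induction n; simpl; [reflexivity|]. change Cadd with Cplus; rewrite <- IHn. cring. Qed.

Lemma csum_mul_r (c : C) (f : nat -> C) n : (csum f n * c)%C = csum (fun k => f k * c)%C n.
Proof. induction n; simpl; [reflexivity|]. change Cadd with Cplus; rewrite <- IHn. cring. Qed.

Lemma csum_exchange (F : nat -> nat -> C) N d :
  csum (fun j => csum (fun m => F j m) d) N = csum (fun m => csum (fun j => F j m) N) d.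
Proof.
  induction N; simpl; [reflexivity|].
  change Cadd with Cplus; rewrite IHN, <- csum_plus. reflexivity.
Qed.

Definition zero_if (b : bool) (x : C) : C := if b then RtoC 0 else x.

Lemma csum_split_term (f : nat -> C) k n : (k <= n)%nat ->
  csum f n = (f k + csum (fun i => zero_if (Nat.eqb i k) (f i)) n)%C.
Proof.
  induction n; intros Hk.
  - assert (k = 0)%nat by lia. subst. simpl. unfold zero_if. simpl. cring.
  - cbn [csum]. change Cadd with Cplus. destruct (Nat.eq_dec k (S n)) as [->|Hne].
    + rewrite Nat.eqb_refl, (csum_ext (fun i => zero_if (Nat.eqb i (S n)) (f i)) f n).
      * unfold zero_if. cring.
      * intros i Hi. destruct (Nat.eqb_spec i (S n)); [lia|reflexivity].
    + rewrite IHn by lia. destruct (Nat.eqb_spec (S n) k); [lia|]. unfold zero_if at 3. cring.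
Qed.

Lemma csum_split_term2 (F : nat -> nat -> C) j0 m0 N d : (j0 <= N)%nat -> (m0 <= d)%nat ->
  csum (fun j => csum (fun m => F j m) d) N =
  (F j0 m0 + csum (fun j => csum (fun m =>
       zero_if (andb (Nat.eqb j j0) (Nat.eqb m m0)) (F j m)) d) N)%C.
Proof.
  intros Hj Hm.
  rewrite (csum_split_term _ j0 N Hj), (csum_split_term (fun m => F j0 m) m0 d Hm).
  rewrite (csum_split_term (fun j => csum (fun m => zero_if (andb (Nat.eqb j j0) (Nat.eqb m m0)) (F j m)) d) j0 N Hj).
  rewrite Nat.eqb_refl. simpl andb.
  rewrite (csum_split_term (fun m => zero_if (Nat.eqb m m0) (F j0 m)) m0 d Hm), Nat.eqb_refl.
  rewrite (csum_ext (fun j => zero_if (Nat.eqb j j0) (csum (fun m => F j m) d))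
    (fun j => zero_if (Nat.eqb j j0) (csum (fun m => zero_if (andb (Nat.eqb j j0) (Nat.eqb m m0)) (F j m)) d)) N).
  rewrite (csum_ext (fun i => zero_if (Nat.eqb i m0) (zero_if (Nat.eqb i m0) (F j0 i)))
    (fun m => zero_if (Nat.eqb m m0) (F j0 m)) d).
  - change (zero_if true (F j0 m0)) with (RtoC 0). cring.
  - intros i _. unfold zero_if. destruct (Nat.eqb_spec i m0); reflexivity.
  - intros i _. unfold zero_if. destruct (Nat.eqb_spec i j0); reflexivity.
Qed.

Lemma sum_ge_term (f : nat -> R) k n : (k <= n)%nat -> (forall i, 0 <= f i) -> f k <= sum_f_R0 f n.
Proof.
  induction n; intros Hk H; simpl.
  - assert (k = 0)%nat by lia; subst; lra.
  - destruct (Nat.eq_dec k (S n)) as [->|Hne].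
    + pose proof (cond_pos_sum f n H). lra.
    + specialize (IHn ltac:(lia) H). specialize (H (S n)). lra.
Qed.

Lemma csum2_bound (G : nat -> nat -> C) (a : nat -> nat -> R) K N d : 0 <= K ->
  (forall j m, (j <= N)%nat -> (m <= d)%nat -> Cmod (G j m) <= a j m * K) ->
  Cmod (csum (fun j => csum (fun m => G j m) d) N) <=
  sum_f_R0 (fun j => sum_f_R0 (fun m => a j m) d) N * K.
Proof.
  intros HK H. eapply Rle_trans; [apply csum_bound|].
  rewrite Rmult_comm, scal_sum. apply sum_Rle. intros j Hj.
  eapply Rle_trans; [apply csum_bound|]. rewrite Rmult_comm, scal_sum.
  apply sum_Rle. intros m Hm. apply H; auto.
Qed.

Lemma Cmod_reverse_triangle a b : Rabs (Cmod a - Cmod b) <= Cmod (a - b).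
Proof.
  apply Rabs_le_between. pose proof (Cmod_triangle b (a - b)). pose proof (Cmod_triangle a (b - a)).
  replace (b + (a - b))%C with a in H by ring. replace (a + (b - a))%C with b in H0 by ring.
  replace (b - a)%C with (- (a - b))%C in H0 by ring. rewrite Cmod_opp in H0. lra.
Qed.

Lemma Cmod_le_near1 (x : C) t : Cmod (x - 1) <= t -> Cmod x <= 1 + t.
Proof.
  intros H. pose proof (Cmod_triangle (x - 1) 1). rewrite Cmod_1 in H0.
  replace (x - 1 + 1)%C with x in H0 by ring. lra.
Qed.

Lemma Cmul_near1 (x y : C) t1 t2 : Cmod (x - 1) <= t1 -> t1 <= 1 -> Cmod (y - 1) <= t2 ->
  Cmod (x * y - 1) <= 2 * t2 + t1.
Proof.
  intros H1 Ht H2. replace (x * y - 1)%C with (x * (y - 1) + (x - 1))%C by ring.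
  eapply Rle_trans; [apply Cmod_triangle|]. rewrite Cmod_mult.
  pose proof (Cmod_le_near1 x t1 H1). pose proof (Cmod_ge_0 x). pose proof (Cmod_ge_0 (y - 1)). nra.
Qed.

Lemma Cpow_near1 (x : C) t k : Cmod (x - 1) <= t -> t <= 1 -> Cmod (x ^ k - 1) <= 3 ^ k * t.
Proof.
  intros H Ht. induction k.
  - simpl. replace (RtoC 1 - RtoC 1)%C with (RtoC 0) by ring.
    rewrite Cmod_0. pose proof (Cmod_ge_0 (x - 1)). lra.
  - replace (x ^ S k)%C with (x * x ^ k)%C by reflexivity.
    eapply Rle_trans; [apply Cmul_near1; [exact H|exact Ht|exact IHk]|].
    assert (1 <= 3 ^ k) by (apply pow_R1_Rle; lra). pose proof (Cmod_ge_0 (x - 1)).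
    simpl. nra.
Qed.

Lemma Cpow_lipschitz (x y : C) B m : Cmod x <= B -> Cmod y <= B -> 1 <= B ->
  Cmod (x ^ m - y ^ m) <= INR m * B ^ m * Cmod (x - y).
Proof.
  intros Hx Hy HB. induction m.
  - simpl. replace (RtoC 1 - RtoC 1)%C with (RtoC 0) by ring. rewrite Cmod_0. lra.
  - replace (x ^ S m - y ^ S m)%C with (x * (x ^ m - y ^ m) + (x - y) * y ^ m)%C
      by (rewrite !Cpow_S; ring).
    eapply Rle_trans; [apply Cmod_triangle|]. rewrite !Cmod_mult, Cmod_pow.
    assert (Cmod y ^ m <= B ^ m) by (apply pow_incr; split; [apply Cmod_ge_0|lra]).
    assert (1 <= B ^ m) by (apply pow_R1_Rle; lra).
    pose proof (Cmod_ge_0 x). pose proof (Cmod_ge_0 (x - y)). pose proof (Cmod_ge_0 (x ^ m - y ^ m)).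
    pose proof (pos_INR m).
    assert (Cmod x * Cmod (x ^ m - y ^ m) <= B * (INR m * B ^ m * Cmod (x - y)))
      by (apply Rmult_le_compat; auto).
    assert (Cmod (x - y) * Cmod y ^ m <= Cmod (x - y) * (B * B ^ m)) by (apply Rmult_le_compat_l; nra).
    rewrite S_INR. simpl. nra.
Qed.

Definition polar (r t : R) : C := (r * cos t, r * sin t).

Lemma Cmod_polar r t : 0 <= r -> Cmod (polar r t) = r.
Proof.
  intros Hr. unfold Cmod, polar. cbn [fst snd].
  replace ((r * cos t) ^ 2 + (r * sin t) ^ 2) with (r ^ 2 * (Rsqr (sin t) + Rsqr (cos t))) by (unfold Rsqr; ring).
  rewrite sin2_cos2, Rmult_1_r. apply sqrt_pow2. lra.
Qed.

Lemma polar_mult r1 t1 r2 t2 : (polar r1 t1 * polar r2 t2)%C = polar (r1 * r2) (t1 + t2).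
Proof. unfold polar, Cmult. simpl. rewrite cos_plus, sin_plus. f_equal; ring. Qed.

Lemma polar_pow r t k : (polar r t ^ k)%C = polar (r ^ k) (INR k * t).
Proof.
  induction k.
  - simpl. unfold polar. rewrite Rmult_0_l, cos_0, sin_0. unfold RtoC. f_equal; ring.
  - rewrite Cpow_S, IHk, polar_mult, S_INR. simpl. f_equal; ring.
Qed.

Section SkewProduct.

Variables (delta d gamma N : nat) (pc : nat -> Cx) (qc : nat -> nat -> Cx) (alpha : R).
Hypothesis Hp_monic : pc delta = Cx1.
Hypothesis Hd : (2 <= d)%nat.
Hypothesis Hq_supp : forall n m, (N < n)%nat \/ (d < m)%nat -> qc n m = Cx0.
Hypothesis Hb_monic : qc gamma d = Cx1.
Hypothesis Hdd : (d < delta)%nat.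
Hypothesis Halpha_ub : forall n m, qc n m <> Cx0 -> INR n / (INR delta - INR m) <= alpha.
Hypothesis Halpha_eq : alpha = INR gamma / (INR delta - INR d).

(* The monomial [z^j w^m] has weight [j + alpha m]; those of weight exactly
   [alpha delta] make up [h], all the others have strictly smaller weight. *)
Definition weight_gap (j m : nat) : R := INR j + alpha * INR m - alpha * INR delta.
Definition exact_weight (j m : nat) : Prop := weight_gap j m = 0.

(* [sum |q_jm|] and [sum |p_k|] control all the error terms. *)
Definition qmass : R := sum_f_R0 (fun j => sum_f_R0 (fun m => Cmod (qc j m)) d) N.
Definition pmass : R := sum_f_R0 (fun k => Cmod (pc k)) delta.

Lemma alpha_nonneg : 0 <= alpha.
Proof.
  assert (INR d < INR delta) by (apply lt_INR; lia).
  rewrite Halpha_eq. apply Rdiv_le_0_compat; [apply pos_INR|lra].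
Qed.

Lemma gamma_eq : INR gamma = alpha * (INR delta - INR d).
Proof. assert (INR d < INR delta) by (apply lt_INR; lia). rewrite Halpha_eq. field. lra. Qed.

(* [z^gamma w^d] is a monomial of [q], so [gamma <= N] and [qmass >= 1]. *)
Lemma gamma_le_N : (gamma <= N)%nat.
Proof.
  destruct (Compare_dec.le_lt_dec gamma N) as [|Hlt]; [auto|exfalso].
  assert (E : qc gamma d = Cx0) by (apply Hq_supp; lia). rewrite Hb_monic in E.
  unfold Cx1, Cx0 in E. injection E. lra.
Qed.

Lemma qmass_ge1 : 1 <= qmass.
Proof.
  unfold qmass. eapply Rle_trans; [|apply (sum_ge_term _ gamma N gamma_le_N)].
  - eapply Rle_trans; [|apply (sum_ge_term _ d d (le_n d))]; cbv beta.
    + rewrite Hb_monic. change Cx1 with (RtoC 1). rewrite Cmod_1. lra.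
    + intros; apply Cmod_ge_0.
  - intros; apply cond_pos_sum; intros; apply Cmod_ge_0.
Qed.

Lemma pmass_ge1 : 1 <= pmass.
Proof.
  unfold pmass. eapply Rle_trans; [|apply (sum_ge_term _ delta delta (le_n delta))]; cbv beta.
  - rewrite Hp_monic. change Cx1 with (RtoC 1). rewrite Cmod_1. lra.
  - intros; apply Cmod_ge_0.
Qed.

Lemma exact_weight_exponents j m : (m <= d)%nat -> exact_weight j m ->
  (gamma <= j)%nat /\ INR (j - gamma) = alpha * INR (d - m) /\
  (gamma * (d - m) + d * (j - gamma) = delta * (j - gamma))%nat.
Proof.
  unfold exact_weight, weight_gap. intros Hm He.
  pose proof gamma_eq as Hg. pose proof alpha_nonneg.
  assert (Hdm : INR (d - m) = INR d - INR m) by (apply minus_INR; auto).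
  assert (INR m <= INR d) by (apply le_INR; auto).
  assert (Hj : INR j - INR gamma = alpha * (INR d - INR m)) by lra.
  assert (Hgj : (gamma <= j)%nat) by (apply INR_le; nra).
  assert (Hjg : INR (j - gamma) = INR j - INR gamma) by (apply minus_INR; auto).
  split; [auto|]. split; [rewrite Hjg, Hdm; lra|].
  apply INR_eq. rewrite !plus_INR, !mult_INR, Hjg, Hdm, Hj, Hg. ring.
Qed.

Lemma exact_weight_top j : exact_weight j d -> j = gamma.
Proof. unfold exact_weight, weight_gap. intros Hw. pose proof gamma_eq. apply INR_eq. lra. Qed.

Lemma exact_weight_lead : exact_weight gamma d.
Proof. unfold exact_weight, weight_gap. pose proof gamma_eq. lra. Qed.

(* By the choice of [alpha], every monomial of [q] has weight at most [alpha delta]. *)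
Lemma weight_gap_nonpos j m : (m <= d)%nat -> qc j m <> Cx0 -> weight_gap j m <= 0.
Proof.
  intros Hm Hq. pose proof (Halpha_ub j m Hq) as Hub. unfold weight_gap.
  assert (INR m < INR delta) by (apply lt_INR; lia).
  apply (Rmult_le_compat_r (INR delta - INR m)) in Hub; [|lra].
  replace (INR j / (INR delta - INR m) * (INR delta - INR m)) with (INR j) in Hub by (field; lra).
  lra.
Qed.

Definition gap_small (X eg : R) : Prop :=
  forall j m, (j <= N)%nat -> (m <= d)%nat -> qc j m <> Cx0 -> ~ exact_weight j m ->
  Rpower X (weight_gap j m) <= eg.

(* Since there are finitely many monomials, each with negative weight gap,
   [gap_small X eg] holds for all large [X]. *)
Lemma gap_small_eventually eg : 0 < eg -> exists R, 1 <= R /\ forall X, R <= X -> gap_small X eg.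
Proof.
  intros Heg.
  set (P := fun (j : nat) R => 1 <= R /\ forall X, R <= X -> forall m, (m <= d)%nat ->
              qc j m <> Cx0 -> ~ exact_weight j m -> Rpower X (weight_gap j m) <= eg).
  assert (Pmono : forall (j : nat) R R', R <= R' -> P j R -> P j R').
  { intros j R R' HR [H1 H2]. split; [lra|]. intros X HX. apply H2. lra. }
  destruct (common_threshold P N Pmono) as [R HR].
  - intros j Hj.
    set (Pj := fun (m : nat) R => 1 <= R /\ forall X, R <= X ->
                 qc j m <> Cx0 -> ~ exact_weight j m -> Rpower X (weight_gap j m) <= eg).
    assert (Pjmono : forall (m : nat) R R', R <= R' -> Pj m R -> Pj m R').
    { intros m R R' HR [H1 H2]. split; [lra|]. intros X HX. apply H2. lra. }
    destruct (common_threshold Pj d Pjmono) as [R HR].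
    + intros m Hm.
      destruct (classic (qc j m <> Cx0 /\ ~ exact_weight j m)) as [[Hq He]|Hno].
      * pose proof (weight_gap_nonpos j m Hm Hq).
        assert (weight_gap j m < 0) by (unfold exact_weight in He; lra).
        destruct (Rpower_small _ eg H0 Heg) as [R [HR1 HR2]].
        exists R. split; [auto|]. intros X HX _ _. auto.
      * exists 1. split; [lra|]. intros X _ Hq He. tauto.
    + exists R. split; [destruct (HR 0%nat ltac:(lia)); auto|].
      intros X HX m Hm. apply (HR m Hm). auto.
  - exists R. split; [destruct (HR 0%nat ltac:(lia)); auto|].
    intros X HX j m Hj Hm. apply (HR j Hj); auto.
Qed.

(** ** The base polynomial [p] near infinity and the base orbit *)

Definition peval (Z : C) : C := poly1_eval delta pc Z.
Definition qeval (Z W : C) : C := poly2_eval N d qc Z W.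

(* Beyond this radius [p] behaves like [Z^delta]. *)
Definition Rbig : R := 2 * pmass + 2.

Lemma p_minus_leading Z : 1 <= Cmod Z -> Cmod (peval Z - Z ^ delta) <= pmass * Cmod Z ^ (delta - 1).
Proof.
  intros HZ. unfold peval, poly1_eval.
  rewrite (csum_ext _ (fun k => pc k * Z ^ k)%C) by (intros; rewrite Cpow_eq; reflexivity).
  rewrite (csum_split_term _ delta delta (le_n _)), Hp_monic. change Cx1 with (RtoC 1).
  match goal with |- Cmod ?e <= _ =>
    assert (E : e = csum (fun i => zero_if (i =? delta)%nat (pc i * Z ^ i)) delta) by cring;
    rewrite E end.
  eapply Rle_trans; [apply csum_bound|]. unfold pmass. rewrite Rmult_comm, scal_sum.
  apply sum_Rle. intros k Hk. unfold zero_if. destruct (Nat.eqb_spec k delta).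
  - rewrite Cmod_0. apply Rmult_le_pos; [apply Cmod_ge_0|apply pow_le; lra].
  - rewrite Cmod_mult, Cmod_pow. apply Rmult_le_compat_l; [apply Cmod_ge_0|]. apply Rle_pow; [auto|lia].
Qed.

Lemma p_near_infinity Z : Rbig <= Cmod Z ->
  Z <> RtoC 0 /\ Cmod Z <= Cmod (peval Z) /\ Cmod (peval Z / Z ^ delta - 1) <= pmass / Cmod Z.
Proof.
  unfold Rbig. intros HZ. pose proof pmass_ge1.
  assert (HZ0 : 0 < Cmod Z) by lra.
  assert (Hne : Z <> RtoC 0) by (intros E; rewrite E, Cmod_0 in HZ0; lra).
  assert (HZd : (Z ^ delta)%C <> RtoC 0) by (apply Cpow_nz; auto).
  pose proof (p_minus_leading Z ltac:(lra)) as Hb.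
  assert (Hpow : Cmod Z ^ delta = Cmod Z ^ (delta - 1) * Cmod Z)
    by (replace delta with (S (delta - 1)) at 1 by lia; simpl; ring).
  assert (1 <= Cmod Z ^ (delta - 1)) by (apply pow_R1_Rle; lra).
  split; [auto|]. split.
  - pose proof (Cmod_triangle (peval Z) (- (peval Z - Z ^ delta))) as T.
    replace (peval Z + - (peval Z - Z ^ delta))%C with (Z ^ delta)%C in T by ring.
    rewrite Cmod_opp, Cmod_pow, Hpow in T.
    assert (Cmod Z <= Cmod Z ^ (delta - 1)) by (rewrite <- (pow_1 (Cmod Z)) at 1; apply Rle_pow; lia || lra).
    nra.
  - replace (peval Z / Z ^ delta - 1)%C with ((peval Z - Z ^ delta) / Z ^ delta)%C by (field; auto).
    rewrite Cmod_div, Cmod_pow, Hpow by auto.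
    apply Rmult_le_reg_r with (Cmod Z ^ (delta - 1) * Cmod Z); [nra|]. unfold Rdiv.
    rewrite Rmult_assoc, Rinv_l by nra.
    replace (pmass * / Cmod Z * (Cmod Z ^ (delta - 1) * Cmod Z)) with (pmass * Cmod Z ^ (delta - 1))
      by (field; lra).
    lra.
Qed.

Definition Zn (z w : C) (n : nat) : C := fst (skew_iter delta N d pc qc n z w).
Definition Wn (z w : C) (n : nat) : C := snd (skew_iter delta N d pc qc n z w).

Lemma Zn_S z w n : Zn z w (S n) = peval (Zn z w n).
Proof. reflexivity. Qed.
Lemma Wn_S z w n : Wn z w (S n) = qeval (Zn z w n) (Wn z w n).
Proof. reflexivity. Qed.

Lemma Zn_escapes z w : Rbig <= Cmod z -> forall n, Cmod z <= Cmod (Zn z w n).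
Proof.
  intros Hz n. induction n; [apply Rle_refl|].
  rewrite Zn_S. destruct (p_near_infinity (Zn z w n)) as [_ [H _]]; lra.
Qed.

Lemma Zn_nonzero z w : Rbig <= Cmod z -> forall n, Zn z w n <> RtoC 0.
Proof.
  intros Hz n E. pose proof (Zn_escapes z w Hz n). pose proof pmass_ge1.
  unfold Rbig in Hz. rewrite E, Cmod_0 in H. lra.
Qed.

Definition rho (z w : C) (n : nat) : R :=
  Rpower (Cmod (Zn z w n)) (alpha * INR delta) / Rpower (Cmod (Zn z w (S n))) alpha.

(* [rho_n > 0], and [ln rho_n = O(1/|z|)] since [Z_(n+1) ~ Z_n^delta]. *)
Lemma rho_pos z w n : 0 < rho z w n.
Proof. unfold rho, Rpower. apply Rdiv_lt_0_compat; apply exp_pos. Qed.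

Lemma ln_rho_bound z w n : Rbig <= Cmod z -> Rabs (ln (rho z w n)) <= 2 * alpha * pmass / Cmod z.
Proof.
  intros Hz. pose proof pmass_ge1. pose proof alpha_nonneg. unfold Rbig in Hz.
  pose proof (Zn_escapes z w Hz n) as H1. pose proof (Zn_escapes z w Hz (S n)) as H2.
  rewrite Zn_S in H2. unfold rho. rewrite Zn_S.
  set (Z := Zn z w n) in *.
  destruct (p_near_infinity Z ltac:(unfold Rbig; lra)) as [HZ0 [_ Hs]].
  assert (HZd : (Z ^ delta)%C <> RtoC 0) by (apply Cpow_nz; auto).
  set (s := (peval Z / Z ^ delta)%C) in *.
  assert (Hms : Cmod s = Cmod (peval Z) / Cmod Z ^ delta) by (unfold s; rewrite Cmod_div, Cmod_pow; auto).
  assert (Hln : ln (Rpower (Cmod Z) (alpha * INR delta) / Rpower (Cmod (peval Z)) alpha)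
                = - alpha * ln (Cmod s)).
  { assert (0 < Cmod Z ^ delta) by (apply pow_lt; lra).
    rewrite ln_div, !ln_Rpower, Hms, ln_div, ln_pow by (unfold Rpower; try apply exp_pos; lra).
    ring. }
  rewrite Hln.
  assert (Hsmall : Cmod (s - 1) <= pmass / Cmod z).
  { eapply Rle_trans; [apply Hs|]. apply Rmult_le_compat_l; [lra|]. apply Rinv_le_contravar; lra. }
  assert (Ht : Rabs (Cmod s - 1) <= pmass / Cmod z).
  { eapply Rle_trans; [|exact Hsmall]. rewrite <- Cmod_1 at 1. apply Cmod_reverse_triangle. }
  assert (pmass / Cmod z <= 1/2)
    by (apply Rmult_le_reg_r with (Cmod z); unfold Rdiv; [lra|]; rewrite Rmult_assoc, Rinv_l by lra; lra).
  pose proof (ln_1p_bound (Cmod s - 1) ltac:(lra)) as Hl.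
  replace (1 + (Cmod s - 1)) with (Cmod s) in Hl by ring.
  rewrite Rabs_mult, Rabs_Ropp, Rabs_right by lra.
  replace (2 * alpha * pmass / Cmod z) with (alpha * (2 * (pmass / Cmod z))) by (field; lra).
  apply Rmult_le_compat_l; lra.
Qed.

Lemma rho_uniform t : 0 < t -> exists R, Rbig <= R /\ forall z w n, R <= Cmod z ->
  Rabs (rho z w n - 1) <= t /\ rho z w n <= 2 /\ Rabs (ln (rho z w n)) <= t.
Proof.
  intros Ht. pose proof pmass_ge1. pose proof alpha_nonneg.
  set (t' := Rmin t (1/2)).
  assert (Ht' : 0 < t') by (apply Rmin_glb_lt; lra).
  assert (t' <= t) by apply Rmin_l. assert (t' <= 1/2) by apply Rmin_r.
  destruct (eventually_small_ratio (4 * alpha * pmass) t' ltac:(nra) Ht') as [R1 [HR1 HR1']].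
  exists (Rmax R1 Rbig). split; [apply Rmax_r|]. intros z w n Hz.
  pose proof (Rmax_l R1 Rbig). pose proof (Rmax_r R1 Rbig).
  specialize (HR1' (Cmod z) ltac:(lra)).
  assert (Hl : Rabs (ln (rho z w n)) <= t' / 2).
  { eapply Rle_trans; [apply ln_rho_bound; lra|].
    replace (2 * alpha * pmass / Cmod z) with (/ 2 * (4 * alpha * pmass / Cmod z))
      by (unfold Rbig in *; field; lra). lra. }
  pose proof (rho_pos z w n).
  pose proof (exp_m1_bound (ln (rho z w n)) ltac:(lra)) as Hb. rewrite exp_ln in Hb by auto.
  pose proof (ln_small_bounds (rho z w n) ltac:(auto) ltac:(lra)).
  repeat split; lra.
Qed.

(** ** The renormalised fiber coordinate [v_n = zeta_n W_n] *)

(* [zeta_0] is the chosen branch of [z^(-alpha)], and [zeta_(n+1) = rho_n zeta_n^d / Z_n^gamma],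
   so that [zeta_n] is a branch of [Z_n^(-alpha)] compatible with the dynamics. *)
Fixpoint zeta (z : C) (th : R) (w : C) (n : nat) : C :=
  match n with
  | O => zpow_branch alpha z th
  | S k => (RtoC (rho z w k) * zeta z th w k ^ d / Zn z w k ^ gamma)%C
  end.

Definition vn z th w n : C := (zeta z th w n * Wn z w n)%C.

Lemma zeta_mod z th w n : Rbig <= Cmod z ->
  Cmod (zeta z th w n) = / Rpower (Cmod (Zn z w n)) alpha.
Proof.
  intros Hz. pose proof pmass_ge1. induction n as [|n IH].
  - simpl. unfold zpow_branch. rewrite Cnorm_Cmod.
    change (_ * cos _, _ * sin _) with (polar (Rpower (Cmod z) (- alpha)) (- alpha * th)).
    rewrite Cmod_polar, Rpower_Ropp by (left; apply Rpower_pos). reflexivity.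
  - simpl zeta. pose proof (Zn_nonzero z w Hz n) as HZ.
    pose proof (Zn_escapes z w Hz n) as HZl. unfold Rbig in Hz.
    assert (HX : 0 < Cmod (Zn z w n)) by lra.
    rewrite Cmod_div by (apply Cpow_nz; auto).
    rewrite !Cmod_mult, Cmod_R, !Cmod_pow, IH, Rabs_right by (left; apply rho_pos).
    unfold rho. set (X := Cmod (Zn z w n)) in *.
    rewrite pow_inv, <- (Rpower_pow d), <- (Rpower_pow gamma), Rpower_mult by (auto || apply Rpower_pos).
    replace (alpha * INR delta) with (alpha * INR d + INR gamma) by (rewrite gamma_eq; ring).
    rewrite Rpower_plus. pose proof (Rpower_pos X (alpha * INR d)). pose proof (Rpower_pos X (INR gamma)).
    pose proof (Rpower_pos (Cmod (Zn z w (S n))) alpha). field. lra.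
Qed.

(* [|v_n| = |W_n| / |Z_n|^alpha]: the quantity whose escape rate is [G^alpha]. *)
Lemma vn_mod z th w n : Rbig <= Cmod z ->
  Cmod (vn z th w n) = Cmod (Wn z w n) / Rpower (Cmod (Zn z w n)) alpha.
Proof. intros Hz. unfold vn. rewrite Cmod_mult, zeta_mod by auto. unfold Rdiv. ring. Qed.

Lemma monomial_mod z th w n j m : Rbig <= Cmod z ->
  Cmod (zeta z th w (S n) * Zn z w n ^ j * Wn z w n ^ m) =
  rho z w n * Cmod (vn z th w n) ^ m * Rpower (Cmod (Zn z w n)) (weight_gap j m).
Proof.
  intros Hz. pose proof (Zn_escapes z w Hz n). pose proof pmass_ge1. unfold Rbig in Hz.
  rewrite !Cmod_mult, !Cmod_pow, zeta_mod, vn_mod by auto.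
  unfold rho, weight_gap. set (X := Cmod (Zn z w n)) in *. assert (HX : 0 < X) by lra.
  pose proof (Rpower_pos (Cmod (Zn z w (S n))) alpha). set (A := Rpower (Cmod (Zn z w (S n))) alpha) in *.
  unfold Rdiv. rewrite Rpow_mult_distr, pow_inv, <- (Rpower_pow m (Rpower X alpha)), Rpower_mult,
    <- (Rpower_pow j X) by (auto || apply Rpower_pos).
  assert (Hsplit : Rpower X (alpha * INR delta) * Rpower X (INR j + alpha * INR m - alpha * INR delta)
                   = Rpower X (INR j) * Rpower X (alpha * INR m)) by (rewrite <- !Rpower_plus; f_equal; ring).
  pose proof (Rpower_pos X (alpha * INR m)).
  transitivity ((Rpower X (alpha * INR delta) * Rpower X (INR j + alpha * INR m - alpha * INR delta))
                * / A * Cmod (Wn z w n) ^ m * / Rpower X (alpha * INR m)).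
  - rewrite Hsplit. field. split; lra.
  - ring.
Qed.

Lemma vn_S_expand z th w n :
  vn z th w (S n) = csum (fun j => csum (fun m =>
    (qc j m * (zeta z th w (S n) * Zn z w n ^ j * Wn z w n ^ m))%C) d) N.
Proof.
  unfold vn. rewrite Wn_S. unfold qeval, poly2_eval. rewrite csum_mul_l. apply csum_ext. intros j _.
  rewrite csum_mul_l. apply csum_ext. intros m _. cpow_fix. change Cmul with Cmult. cring.
Qed.

Lemma lead_monomial z th w n : Rbig <= Cmod z ->
  (zeta z th w (S n) * Zn z w n ^ gamma * Wn z w n ^ d = RtoC (rho z w n) * vn z th w n ^ d)%C.
Proof.
  intros Hz. pose proof (Zn_nonzero z w Hz n).
  assert ((Zn z w n ^ gamma)%C <> RtoC 0) by (apply Cpow_nz; auto).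
  simpl zeta. unfold vn. rewrite Cpow_mult_l. field. auto.
Qed.

(* Other exact-weight monomials have [m < d], hence size [<= rho X^(d-1)], [X = max 1 |v_n|]. *)
Lemma exact_monomial_bound z th w n j m : Rbig <= Cmod z -> (m <= d)%nat ->
  exact_weight j m -> ~ (j = gamma /\ m = d) ->
  Cmod (zeta z th w (S n) * Zn z w n ^ j * Wn z w n ^ m)
  <= rho z w n * Rmax 1 (Cmod (vn z th w n)) ^ (d - 1).
Proof.
  intros Hz Hm He Hlead. rewrite monomial_mod by auto. unfold exact_weight in He.
  assert (m <> d) by (intros ->; apply Hlead; split; [apply exact_weight_top|]; auto).
  rewrite He, Rpower_O, Rmult_1_r by (pose proof (Zn_escapes z w Hz n); unfold Rbig in Hz;
                                     pose proof pmass_ge1; lra).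
  apply Rmult_le_compat_l; [left; apply rho_pos|]. apply pow_le_Rmax1; [apply Cmod_ge_0|lia].
Qed.

Lemma nonexact_monomial_bound z th w n j m eg : Rbig <= Cmod z -> gap_small (Cmod (Zn z w n)) eg ->
  (j <= N)%nat -> (m <= d)%nat -> qc j m <> Cx0 -> ~ exact_weight j m ->
  Cmod (zeta z th w (S n) * Zn z w n ^ j * Wn z w n ^ m)
  <= rho z w n * (eg * Rmax 1 (Cmod (vn z th w n)) ^ d).
Proof.
  intros Hz Hgap Hj Hm Hq He. rewrite monomial_mod, Rmult_assoc by auto.
  apply Rmult_le_compat_l; [left; apply rho_pos|]. rewrite Rmult_comm.
  apply Rmult_le_compat; [left; apply Rpower_pos|apply pow_le, Cmod_ge_0|apply Hgap; auto|].
  apply pow_le_Rmax1; [apply Cmod_ge_0|auto].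
Qed.

Lemma vn_step z th w n eg : Rbig <= Cmod z -> 0 <= eg -> gap_small (Cmod (Zn z w n)) eg ->
  Cmod (vn z th w (S n) - RtoC (rho z w n) * vn z th w n ^ d) <=
  rho z w n * (qmass * Rmax 1 (Cmod (vn z th w n)) ^ (d - 1)
               + qmass * eg * Rmax 1 (Cmod (vn z th w n)) ^ d).
Proof.
  intros Hz Heg Hgap. set (X := Rmax 1 (Cmod (vn z th w n))).
  assert (HX1 : 1 <= X) by apply Rmax_l. pose proof (rho_pos z w n).
  rewrite vn_S_expand, (csum_split_term2 _ gamma d N d gamma_le_N (le_n d)), Hb_monic.
  change Cx1 with (RtoC 1). rewrite Cmult_1_l, lead_monomial by auto.
  match goal with |- Cmod ?e <= _ =>
    assert (E : e = csum (fun j => csum (fun m => zero_if (andb (j =? gamma)%nat (m =? d)%nat)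
                   (qc j m * (zeta z th w (S n) * Zn z w n ^ j * Wn z w n ^ m))%C) d) N) by cring;
    rewrite E end.
  replace (rho z w n * (qmass * X ^ (d - 1) + qmass * eg * X ^ d))
    with (qmass * (rho z w n * (X ^ (d - 1) + eg * X ^ d))) by ring.
  unfold qmass. apply csum2_bound.
  { apply Rmult_le_pos; [lra|]. pose proof (pow_le X (d - 1) ltac:(lra)).
    pose proof (pow_le X d ltac:(lra)). nra. }
  intros j m Hj Hm. pose proof (pow_le X (d - 1) ltac:(lra)). pose proof (pow_le X d ltac:(lra)).
  assert (0 <= eg * X ^ d) by nra.
  unfold zero_if. destruct (andb (j =? gamma)%nat (m =? d)%nat) eqn:Hjm.
  { rewrite Cmod_0. apply Rmult_le_pos; [apply Cmod_ge_0|nra]. }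
  destruct (classic (qc j m = Cx0)) as [Hq|Hq].
  { rewrite Hq. change Cx0 with (RtoC 0). rewrite Cmult_0_l, Cmod_0. nra. }
  rewrite Cmod_mult. apply Rmult_le_compat_l; [apply Cmod_ge_0|].
  assert (0 <= rho z w n * (eg * X ^ d)) by (apply Rmult_le_pos; lra).
  assert (0 <= rho z w n * X ^ (d - 1)) by (apply Rmult_le_pos; lra).
  destruct (classic (exact_weight j m)) as [He|He].
  - assert (~ (j = gamma /\ m = d)) by (intros [-> ->]; rewrite !Nat.eqb_refl in Hjm; discriminate).
    eapply Rle_trans; [apply exact_monomial_bound; auto|]. fold X. lra.
  - eapply Rle_trans; [apply nonexact_monomial_bound; eauto|]. fold X. lra.
Qed.

Lemma vn_almost_power z th w n eg : Rbig <= Cmod z -> 0 <= eg -> gap_small (Cmod (Zn z w n)) eg ->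
  almost_power d qmass (qmass * eg) (/ rho z w n) (Cmod (vn z th w n)) (Cmod (vn z th w (S n))).
Proof.
  intros Hz Heg Hgap. unfold almost_power. pose proof (rho_pos z w n) as Hr.
  pose proof (vn_step z th w n eg Hz Heg Hgap) as H.
  replace (/ rho z w n * Cmod (vn z th w (S n))) with (Cmod (RtoC (/ rho z w n) * vn z th w (S n)))
    by (rewrite Cmod_mult, Cmod_R, Rabs_right; [reflexivity| left; apply Rinv_0_lt_compat; auto]).
  rewrite <- Cmod_pow. eapply Rle_trans; [apply Cmod_reverse_triangle|].
  assert (Hrn : RtoC (rho z w n) <> RtoC 0) by (intros E; apply RtoC_inj in E; lra).
  replace (RtoC (/ rho z w n) * vn z th w (S n) - vn z th w n ^ d)%C
    with (RtoC (/ rho z w n) * (vn z th w (S n) - RtoC (rho z w n) * vn z th w n ^ d))%C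
    by (rewrite RtoC_inv by lra; field; auto).
  rewrite Cmod_mult, Cmod_R, Rabs_right by (left; apply Rinv_0_lt_compat; auto).
  apply Rmult_le_reg_l with (rho z w n); [auto|].
  rewrite <- Rmult_assoc, Rinv_r, Rmult_1_l by lra.
  eapply Rle_trans; [exact H|right; ring].
Qed.

(** ** The polynomial [h] of exact-weight terms *)

Definition heval (x : C) : C := h_eval delta N d qc alpha x.

Definition hcoef (j m : nat) : C :=
  if Req_EM_T (INR j + alpha * INR m) (alpha * INR delta) then qc j m else Cx0.

Lemma hcoef_exact j m : exact_weight j m -> hcoef j m = qc j m.
Proof.
  unfold exact_weight, weight_gap, hcoef. intros He.
  destruct (Req_EM_T _ _) as [|Hn]; [reflexivity|]. exfalso. apply Hn. lra.
Qed.

Lemma hcoef_nonexact j m : ~ exact_weight j m -> hcoef j m = RtoC 0.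
Proof.
  unfold exact_weight, weight_gap, hcoef. intros He.
  destruct (Req_EM_T _ _) as [Hy|]; [|reflexivity]. exfalso. apply He. lra.
Qed.

Lemma hcoef_mod j m : Cmod (hcoef j m) <= Cmod (qc j m).
Proof.
  unfold hcoef. destruct (Req_EM_T _ _); [lra|].
  change Cx0 with (RtoC 0). rewrite Cmod_0. apply Cmod_ge_0.
Qed.

Lemma heval_expand x : heval x = csum (fun j => csum (fun m => (hcoef j m * x ^ m)%C) d) N.
Proof.
  unfold heval, h_eval, poly1_eval, h_coef. rewrite csum_exchange.
  apply csum_ext. intros m _. cpow_fix. change Cmul with Cmult. rewrite csum_mul_r. reflexivity.
Qed.

(* [h] is monic: its coefficient of [w^d] is that of [z^gamma w^d] in [q]. *)
Lemma hcoef_lead : hcoef gamma d = RtoC 1.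
Proof. rewrite hcoef_exact, Hb_monic by apply exact_weight_lead. reflexivity. Qed.

Lemma h_minus_leading x : Cmod (heval x - x ^ d) <= qmass * Rmax 1 (Cmod x) ^ (d - 1).
Proof.
  rewrite heval_expand, (csum_split_term2 _ gamma d N d gamma_le_N (le_n d)), hcoef_lead, Cmult_1_l.
  match goal with |- Cmod (?a + ?b - ?a) <= _ =>
    assert (E : (a + b - a)%C = b) by cring; rewrite E end.
  set (X := Rmax 1 (Cmod x)). assert (1 <= X) by apply Rmax_l.
  unfold qmass. apply csum2_bound; [apply pow_le; lra|].
  intros j m Hj Hm. unfold zero_if. destruct (andb (j =? gamma)%nat (m =? d)%nat) eqn:Hjm.
  { rewrite Cmod_0. apply Rmult_le_pos; [apply Cmod_ge_0|apply pow_le; lra]. }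
  rewrite Cmod_mult, Cmod_pow. destruct (classic (exact_weight j m)) as [He|He].
  - rewrite hcoef_exact by auto. apply Rmult_le_compat_l; [apply Cmod_ge_0|].
    apply pow_le_Rmax1; [apply Cmod_ge_0|]. assert (m <> d); [|lia]. intros ->.
    rewrite (exact_weight_top j He), !Nat.eqb_refl in Hjm. discriminate.
  - rewrite hcoef_nonexact, Cmod_0, Rmult_0_l by auto.
    apply Rmult_le_pos; [apply Cmod_ge_0|apply pow_le; lra].
Qed.

Lemma h_almost_power x : almost_power d qmass 0 1 (Cmod x) (Cmod (heval x)).
Proof.
  unfold almost_power. rewrite Rmult_1_l, Rmult_0_l, Rplus_0_r, <- Cmod_pow.
  eapply Rle_trans; [apply Cmod_reverse_triangle|apply h_minus_leading].
Qed.

Lemma h_bound x : Cmod (heval x) <= (qmass + 1) * Rmax 1 (Cmod x) ^ d.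
Proof.
  pose proof (h_minus_leading x). pose proof qmass_ge1.
  set (X := Rmax 1 (Cmod x)) in *. assert (1 <= X) by apply Rmax_l.
  pose proof (Cmod_triangle (x ^ d) (heval x - x ^ d)).
  replace (x ^ d + (heval x - x ^ d))%C with (heval x) in H2 by ring. rewrite Cmod_pow in H2.
  assert (Cmod x ^ d <= X ^ d) by (apply pow_le_Rmax1; [apply Cmod_ge_0|lia]).
  assert (X ^ (d - 1) <= X ^ d) by (apply Rle_pow; lia || lra).
  assert (qmass * X ^ (d - 1) <= qmass * X ^ d) by (apply Rmult_le_compat_l; lra).
  lra.
Qed.

Lemma h_lipschitz x y B : Cmod x <= B -> Cmod y <= B -> 1 <= B ->
  Cmod (heval x - heval y) <= qmass * (INR d * B ^ d) * Cmod (x - y).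
Proof.
  intros Hx Hy HB. rewrite !heval_expand, <- csum_minus.
  rewrite (csum_ext _ (fun j => csum (fun m => hcoef j m * (x ^ m - y ^ m))%C d)).
  2: { intros j _. rewrite <- csum_minus. apply csum_ext. intros m _. cring. }
  rewrite Rmult_assoc. unfold qmass. apply csum2_bound.
  { apply Rmult_le_pos; [apply Rmult_le_pos; [apply pos_INR|apply pow_le; lra]|apply Cmod_ge_0]. }
  intros j m Hj Hm. rewrite Cmod_mult.
  apply Rmult_le_compat; [apply Cmod_ge_0|apply Cmod_ge_0|apply hcoef_mod|].
  eapply Rle_trans; [apply Cpow_lipschitz; eauto|].
  apply Rmult_le_compat_r; [apply Cmod_ge_0|]. apply Rmult_le_compat;
    [apply pos_INR|apply pow_le; lra|apply le_INR; auto|apply Rle_pow; auto].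
Qed.

Definition green_error : R := INR d * ln (8 * qmass) + 2.

Lemma green_error_nonneg : 0 <= green_error.
Proof.
  unfold green_error. pose proof qmass_ge1. pose proof (pos_INR d).
  assert (0 <= ln (8 * qmass)) by (rewrite <- ln_1; apply ln_le; lra). nra.
Qed.

(* Along the orbit of a point with [|z|] large, the hypotheses of [log_step] hold for [v_n]. *)
Definition orbit_controlled (z : C) (w : C) (eg : R) : Prop :=
  Rbig <= Cmod z /\ 0 <= eg /\ qmass * eg <= 1/4 /\
  (forall n, gap_small (Cmod (Zn z w n)) eg) /\ (forall n, Rabs (ln (rho z w n)) <= 1/2).

Lemma vn_log_step z th w eg n : orbit_controlled z w eg ->
  almost_power d qmass (qmass * eg) (/ rho z w n) (Cmod (vn z th w n)) (Cmod (vn z th w (S n))) /\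
  0 < / rho z w n /\ Rabs (ln (/ rho z w n)) <= 1/2 /\ 0 <= qmass * eg <= 1/4.
Proof.
  intros (Hz & Heg & HAe & Hgap & Hrho). pose proof qmass_ge1. pose proof (rho_pos z w n).
  split; [apply vn_almost_power; auto|].
  rewrite ln_Rinv by auto. rewrite Rabs_Ropp.
  split; [apply Rinv_0_lt_compat; auto|]. split; [auto|]. split; [apply Rmult_le_pos; lra|lra].
Qed.

Lemma G_alpha_rate z th w eg : orbit_controlled z w eg ->
  Un_cv (fun n => / INR d ^ n * logplus (Cmod (vn z th w n))) (G_alpha delta N d pc qc alpha z w) /\
  forall n, Rabs (G_alpha delta N d pc qc alpha z w - / INR d ^ n * logplus (Cmod (vn z th w n)))
            <= green_error / INR d ^ n.
Proof.
  intros Hc. pose proof qmass_ge1. assert (Hz : Rbig <= Cmod z) by apply Hc.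
  destruct (renormalised_limit (fun n => logplus (Cmod (vn z th w n))) d green_error Hd green_error_nonneg)
    as [L [HL1 HL2]].
  - intros n. destruct (vn_log_step z th w eg n Hc) as (Hap & Hs & Hls & He).
    apply (log_step d qmass _ _ (/ rho z w n) (qmass * eg)); auto; apply Cmod_ge_0.
  - replace (G_alpha delta N d pc qc alpha z w) with L; [auto|].
    rewrite <- (lim_seq_eq _ L HL1). unfold G_alpha. f_equal. apply functional_extensionality.
    intros n. cbv zeta. rewrite vn_mod, !Cnorm_Cmod by auto. reflexivity.
Qed.

Lemma G_h_rate c :
  Un_cv (fun n => / INR d ^ n * logplus (Cmod (Nat.iter n heval c))) (G_h delta N d qc alpha c) /\
  forall n, Rabs (G_h delta N d qc alpha c - / INR d ^ n * logplus (Cmod (Nat.iter n heval c)))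
            <= green_error / INR d ^ n.
Proof.
  pose proof qmass_ge1.
  destruct (renormalised_limit (fun n => logplus (Cmod (Nat.iter n heval c))) d green_error Hd
              green_error_nonneg) as [L [HL1 HL2]].
  - intros n. assert (Hl1 : Rabs (ln 1) <= 1/2) by (rewrite ln_1, Rabs_R0; lra).
    exact (log_step d qmass _ _ 1 0 Hd H (Cmod_ge_0 _) (Cmod_ge_0 _) Rlt_0_1 Hl1
             ltac:(lra) (h_almost_power _)).
  - replace (G_h delta N d qc alpha c) with L; [auto|].
    rewrite <- (lim_seq_eq _ L HL1). unfold G_h. f_equal. apply functional_extensionality.
    intros n. rewrite Cnorm_Cmod. reflexivity.
Qed.

Lemma G_alpha_large z th w eg M tau : orbit_controlled z w eg ->
  (forall n, 2 * (qmass * eg) + Rabs (ln (rho z w n)) <= tau) ->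
  8 * qmass <= M -> M <= Cmod (vn z th w 0) ->
  Rabs (G_alpha delta N d pc qc alpha z w - ln (Cmod (vn z th w 0))) <= 2 * qmass / M + tau.
Proof.
  intros Hc Htau HM HM0. pose proof qmass_ge1.
  destruct (G_alpha_rate z th w eg Hc) as [Hcv _].
  assert (Ht0 : 0 <= tau).
  { specialize (Htau 0%nat). destruct Hc as (_ & Heg & _).
    pose proof (Rabs_pos (ln (rho z w 0))). assert (0 <= qmass * eg) by (apply Rmult_le_pos; lra). lra. }
  assert (Esc : forall n, M <= Cmod (vn z th w n) /\
     Rabs (/ INR d ^ n * ln (Cmod (vn z th w n)) - ln (Cmod (vn z th w 0))) <= 2 * qmass / M + tau).
  { apply escaping_rate; auto. intros n Hn.
    destruct (vn_log_step z th w eg n Hc) as (Hap & Hs & Hls & He).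
    destruct (log_step_escaping d qmass _ _ _ _ Hd H (Cmod_ge_0 _) Hs Hls He Hn Hap) as [G1 G2].
    split; [auto|]. rewrite ln_Rinv, Rabs_Ropp in G2 by apply rho_pos.
    specialize (Htau n). lra. }
  apply (limit_bound _ _ _ _ 0 Hcv). intros m _.
  destruct (Esc m) as [Hm1 Hm2]. rewrite logplus_ge1 by lra. auto.
Qed.

Lemma G_h_large c M : 8 * qmass <= M -> M <= Cmod c ->
  Rabs (G_h delta N d qc alpha c - ln (Cmod c)) <= 2 * qmass / M.
Proof.
  intros HM HM0. pose proof qmass_ge1.
  destruct (G_h_rate c) as [Hcv _].
  assert (Esc : forall n, M <= Cmod (Nat.iter n heval c) /\
     Rabs (/ INR d ^ n * ln (Cmod (Nat.iter n heval c)) - ln (Cmod (Nat.iter 0 heval c))) <= 2 * qmass / M + 0).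
  { apply escaping_rate; auto; try lra. intros n Hn.
    destruct (log_step_escaping d qmass _ _ 1 0 Hd H (Cmod_ge_0 _) ltac:(lra)
               ltac:(rewrite ln_1, Rabs_R0; lra) ltac:(lra) Hn (h_almost_power _)) as [G1 G2].
    change (Nat.iter (S n) heval c) with (heval (Nat.iter n heval c)).
    split; [auto|]. rewrite ln_1, Rabs_R0 in G2. lra. }
  rewrite <- (Rplus_0_r (2 * qmass / M)).
  apply (limit_bound _ _ _ _ 0 Hcv). intros m _.
  destruct (Esc m) as [Hm1 Hm2]. rewrite logplus_ge1 by lra. auto.
Qed.

(** ** Finite-time comparison of [v_n] with the orbit of [h] *)

(* For an exact-weight monomial, [zeta_n^(d-m) Z_n^(j-gamma)] has modulus 1; we
   show it tends to 1 as [z -> infinity], for each fixed [n]. *)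
Definition exact_factor z th w n (k1 k2 : nat) : C := (zeta z th w n ^ k1 * Zn z w n ^ k2)%C.

Lemma exact_monomial_factor z th w n j m : Rbig <= Cmod z -> (gamma <= j)%nat -> (m <= d)%nat ->
  (zeta z th w (S n) * Zn z w n ^ j * Wn z w n ^ m =
   RtoC (rho z w n) * exact_factor z th w n (d - m) (j - gamma) * vn z th w n ^ m)%C.
Proof.
  intros Hz Hj Hm. pose proof (Zn_nonzero z w Hz n).
  assert ((Zn z w n ^ gamma)%C <> RtoC 0) by (apply Cpow_nz; auto).
  simpl zeta. unfold vn, exact_factor. rewrite Cpow_mult_l.
  replace j with ((j - gamma) + gamma)%nat at 1 by lia.
  replace d with ((d - m) + m)%nat at 1 by lia.
  rewrite !Cpow_add_r. field. auto.
Qed.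

(* At time 0 the factor is exactly 1: this is where the branch [z^(-alpha)] enters. *)
Lemma exact_factor_0 z th w k1 k2 : Rbig <= Cmod z -> is_arg z th ->
  INR k2 = alpha * INR k1 -> exact_factor z th w 0 k1 k2 = RtoC 1.
Proof.
  intros Hz Harg Hk. pose proof pmass_ge1. unfold Rbig in Hz.
  assert (Hz0 : 0 < Cmod z) by lra.
  unfold exact_factor. simpl zeta. unfold zpow_branch. rewrite Cnorm_Cmod.
  change (_ * cos _, _ * sin _) with (polar (Rpower (Cmod z) (- alpha)) (- alpha * th)).
  unfold is_arg in Harg. rewrite Cnorm_Cmod in Harg.
  change (Zn z w 0) with z.
  replace (z ^ k2)%C with (polar (Cmod z) th ^ k2)%C by (unfold polar; rewrite <- Harg; reflexivity).
  rewrite !polar_pow, polar_mult.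
  replace (INR k1 * (- alpha * th) + INR k2 * th) with 0 by (rewrite Hk; ring).
  replace (Rpower (Cmod z) (- alpha) ^ k1 * Cmod z ^ k2) with 1.
  - unfold polar. rewrite cos_0, sin_0. unfold RtoC. f_equal; ring.
  - rewrite <- (Rpower_pow k1), <- (Rpower_pow k2), Rpower_mult, <- Rpower_plus, Hk by (auto || apply Rpower_pos).
    replace (- alpha * INR k1 + alpha * INR k1) with 0 by ring. rewrite Rpower_O; auto.
Qed.

(* From time [n] to [n+1] the factor is raised to the [d]-th power and multiplied
   by powers of [rho_n] and of [Z_(n+1) / Z_n^delta], all close to 1. *)
Lemma exact_factor_S z th w n k1 k2 : Rbig <= Cmod z ->
  (gamma * k1 + d * k2 = delta * k2)%nat ->
  exact_factor z th w (S n) k1 k2 =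
  (RtoC (rho z w n) ^ k1 * exact_factor z th w n k1 k2 ^ d * (Zn z w (S n) / Zn z w n ^ delta) ^ k2)%C.
Proof.
  intros Hz Hk. pose proof (Zn_nonzero z w Hz n) as HZ.
  assert (HZg : (Zn z w n ^ gamma)%C <> RtoC 0) by (apply Cpow_nz; auto).
  assert (HZd : (Zn z w n ^ delta)%C <> RtoC 0) by (apply Cpow_nz; auto).
  unfold exact_factor. simpl zeta.
  set (Z := Zn z w n). set (Z' := Zn z w (S n)). set (r := RtoC (rho z w n)). set (ze := zeta z th w n).
  unfold Cdiv. rewrite !Cpow_mult_l, !Cpow_inv, <- !Cpow_mult_r by auto.
  replace (d * k1)%nat with (k1 * d)%nat by lia. rewrite !Cpow_mult_r.
  assert (E : (Z ^ (gamma * k1) * (Z ^ k2) ^ d = (Z ^ delta) ^ k2)%C)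
    by (rewrite <- !Cpow_mult_r, <- Cpow_add_r; f_equal; lia).
  assert ((Z ^ (gamma * k1))%C <> RtoC 0) by (apply Cpow_nz; auto).
  assert (((Z ^ delta) ^ k2)%C <> RtoC 0) by (apply Cpow_nz; auto).
  rewrite <- E, Cpow_mult_r. field. repeat split; auto; apply Cpow_nz; auto; apply Cpow_nz; auto.
Qed.

Lemma exact_factor_near1 n : forall eta, 0 < eta -> exists R, Rbig <= R /\
  forall z th w, R <= Cmod z -> is_arg z th ->
  forall j m, (j <= N)%nat -> (m <= d)%nat -> exact_weight j m ->
  Cmod (exact_factor z th w n (d - m) (j - gamma) - 1) <= eta.
Proof.
  pose proof pmass_ge1. induction n as [|n IH]; intros eta Heta.
  - exists Rbig. split; [lra|]. intros z th w Hz Harg j m Hj Hm He.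
    destruct (exact_weight_exponents j m Hm He) as (_ & Hk & _).
    rewrite exact_factor_0 by auto. replace (RtoC 1 - RtoC 1)%C with (RtoC 0) by ring.
    rewrite Cmod_0. lra.
  - (* each of the three factors of [exact_factor_S] within [K t] of 1, [K = 3^(N+d)] *)
    set (K := 3 ^ (N + d)). assert (HK : 1 <= K) by (apply pow_R1_Rle; lra).
    assert (Hmin : 0 < Rmin 1 eta) by (apply Rmin_glb_lt; lra).
    set (t := Rmin 1 eta / (5 * K)).
    assert (Ht : 0 < t) by (unfold t; apply Rdiv_lt_0_compat; lra).
    assert (Ht5 : 5 * K * t = Rmin 1 eta) by (unfold t; field; lra).
    pose proof (Rmin_l 1 eta). pose proof (Rmin_r 1 eta).
    assert (Kt1 : K * t <= 1/5) by lra. assert (t <= 1) by nra.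
    destruct (IH t Ht) as [R1 [HR1 HIH]].
    destruct (rho_uniform t Ht) as [R2 [HR2 Hrho]].
    destruct (eventually_small_ratio pmass t ltac:(lra) Ht) as [R3 [HR3 HR3']].
    exists (Rmax R1 (Rmax R2 R3)). split; [eapply Rle_trans; [exact HR1|apply Rmax_l]|].
    intros z th w Hz Harg j m Hj Hm He.
    pose proof (Rmax_l R1 (Rmax R2 R3)). pose proof (Rmax_r R1 (Rmax R2 R3)).
    pose proof (Rmax_l R2 R3). pose proof (Rmax_r R2 R3).
    assert (Hzb : Rbig <= Cmod z) by lra.
    destruct (exact_weight_exponents j m Hm He) as (Hgj & _ & Hnat).
    rewrite exact_factor_S by auto.
    set (k1 := (d - m)%nat). set (k2 := (j - gamma)%nat).
    assert (Hpow : forall (x : C) k, (k <= N + d)%nat -> Cmod (x - 1) <= t -> Cmod (x ^ k - 1) <= K * t).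
    { intros x k Hk Hx. eapply Rle_trans; [apply Cpow_near1; eauto|].
      apply Rmult_le_compat_r; [lra|]. apply Rle_pow; [lra|auto]. }
    assert (E1 : Cmod (RtoC (rho z w n) ^ k1 - 1) <= K * t).
    { apply Hpow; [unfold k1; lia|]. rewrite <- RtoC_minus, Cmod_R. apply Hrho. lra. }
    assert (E2 : Cmod (exact_factor z th w n k1 k2 ^ d - 1) <= K * t)
      by (apply Hpow; [lia|apply HIH; auto; lra]).
    assert (E3 : Cmod ((Zn z w (S n) / Zn z w n ^ delta) ^ k2 - 1) <= K * t).
    { apply Hpow; [unfold k2; lia|]. rewrite Zn_S. pose proof (Zn_escapes z w Hzb n).
        destruct (p_near_infinity (Zn z w n)) as (_ & _ & Hp); [lra|].
        eapply Rle_trans; [exact Hp|]. eapply Rle_trans; [|apply (HR3' (Cmod z)); lra].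
        apply Rmult_le_compat_l; [lra|]. apply Rinv_le_contravar; lra. }
    assert (E12 : Cmod (RtoC (rho z w n) ^ k1 * exact_factor z th w n k1 k2 ^ d - 1) <= 3 * (K * t))
      by (eapply Rle_trans; [apply Cmul_near1; eauto; lra|lra]).
    eapply Rle_trans; [apply Cmul_near1; eauto; lra|]. lra.
Qed.

Lemma vn_step_vs_h z th w n eg eta : Rbig <= Cmod z -> 0 <= eg -> 0 <= eta -> rho z w n <= 2 ->
  gap_small (Cmod (Zn z w n)) eg ->
  (forall j m, (j <= N)%nat -> (m <= d)%nat -> exact_weight j m ->
     Cmod (RtoC (rho z w n) * exact_factor z th w n (d - m) (j - gamma) - 1) <= eta) ->
  Cmod (vn z th w (S n) - heval (vn z th w n))
  <= qmass * ((eta + 2 * eg) * Rmax 1 (Cmod (vn z th w n)) ^ d).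
Proof.
  intros Hz Heg Heta Hr2 Hgap Hexact. set (X := Rmax 1 (Cmod (vn z th w n))).
  assert (HX1 : 1 <= X) by apply Rmax_l. pose proof (rho_pos z w n).
  assert (HXd : 0 <= X ^ d) by (apply pow_le; lra).
  assert (Hvm : forall m, (m <= d)%nat -> Cmod (vn z th w n) ^ m <= X ^ d)
    by (intros m Hm; apply pow_le_Rmax1; [apply Cmod_ge_0|auto]).
  rewrite vn_S_expand, heval_expand, <- csum_minus.
  rewrite (csum_ext _ (fun j => csum (fun m => qc j m * (zeta z th w (S n) * Zn z w n ^ j * Wn z w n ^ m)
                                               - hcoef j m * vn z th w n ^ m)%C d))
    by (intros j _; rewrite <- csum_minus; reflexivity).
  unfold qmass. apply csum2_bound; [apply Rmult_le_pos; lra|].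
  intros j m Hj Hm. destruct (classic (exact_weight j m)) as [He|He].
  - destruct (exact_weight_exponents j m Hm He) as [Hgj _].
    rewrite hcoef_exact, exact_monomial_factor by auto.
    match goal with |- Cmod ?e <= _ =>
      replace e with (qc j m * (vn z th w n ^ m *
        (RtoC (rho z w n) * exact_factor z th w n (d - m) (j - gamma) - 1)))%C by ring end.
    rewrite !Cmod_mult, Cmod_pow. apply Rmult_le_compat_l; [apply Cmod_ge_0|].
    specialize (Hexact j m Hj Hm He). specialize (Hvm m Hm).
    pose proof (Cmod_ge_0 (vn z th w n)). pose proof (pow_le (Cmod (vn z th w n)) m ltac:(lra)).
    pose proof (Cmod_ge_0 (RtoC (rho z w n) * exact_factor z th w n (d - m) (j - gamma) - 1)).
    assert (0 <= eg * X ^ d) by (apply Rmult_le_pos; lra). nra.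
  - rewrite hcoef_nonexact, Cmult_0_l by auto.
    replace (qc j m * (zeta z th w (S n) * Zn z w n ^ j * Wn z w n ^ m) - 0)%C
      with (qc j m * (zeta z th w (S n) * Zn z w n ^ j * Wn z w n ^ m))%C by ring.
    destruct (classic (qc j m = Cx0)) as [Hq|Hq].
    { rewrite Hq. change Cx0 with (RtoC 0). rewrite Cmult_0_l, !Cmod_0. nra. }
    rewrite Cmod_mult. apply Rmult_le_compat_l; [apply Cmod_ge_0|].
    eapply Rle_trans; [apply nonexact_monomial_bound; eauto|]. fold X.
    assert (0 <= eg * X ^ d) by (apply Rmult_le_pos; lra).
    assert (0 <= eta * X ^ d) by (apply Rmult_le_pos; lra). nra.
Qed.

Fixpoint h_orbit_bound (M : R) (k : nat) : R :=
  match k with O => Rmax 1 M | S k' => (qmass + 1) * h_orbit_bound M k' ^ d end.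

Lemma h_orbit_bound_ge1 M k : 1 <= h_orbit_bound M k.
Proof.
  pose proof qmass_ge1. induction k; simpl; [apply Rmax_l|].
  assert (1 <= h_orbit_bound M k ^ d) by (apply pow_R1_Rle; lra). nra.
Qed.

Lemma h_orbit_bounded M c k : Cmod c <= M -> Cmod (Nat.iter k heval c) <= h_orbit_bound M k.
Proof.
  intros Hc. pose proof qmass_ge1. induction k; simpl.
  - eapply Rle_trans; [exact Hc|apply Rmax_r].
  - eapply Rle_trans; [apply h_bound|]. apply Rmult_le_compat_l; [lra|].
    apply pow_incr. split; [pose proof (Rmax_l 1 (Cmod (Nat.iter k heval c))); lra|].
    apply Rmax_lub; [apply h_orbit_bound_ge1|auto].
Qed.

Lemma vn_follows_h n tau : 0 < tau -> exists R, Rbig <= R /\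
  forall z th w, R <= Cmod z -> is_arg z th ->
  Cmod (vn z th w (S n) - heval (vn z th w n)) <= qmass * (3 * tau * Rmax 1 (Cmod (vn z th w n)) ^ d).
Proof.
  intros Htau. set (t := Rmin (tau / 3) 1).
  assert (Ht : 0 < t) by (apply Rmin_glb_lt; lra).
  assert (t <= tau / 3) by apply Rmin_l. assert (t <= 1) by apply Rmin_r.
  destruct (gap_small_eventually tau Htau) as [R1 [HR1 Hgap]].
  destruct (exact_factor_near1 n (tau / 3) ltac:(lra)) as [R2 [HR2 Hfac]].
  destruct (rho_uniform t Ht) as [R3 [HR3 Hrho]].
  exists (Rmax R1 (Rmax R2 R3)). split; [eapply Rle_trans; [exact HR2|]; eapply Rle_trans; [apply Rmax_l|apply Rmax_r]|].
  intros z th w Hz Harg.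
  pose proof (Rmax_l R1 (Rmax R2 R3)). pose proof (Rmax_r R1 (Rmax R2 R3)).
  pose proof (Rmax_l R2 R3). pose proof (Rmax_r R2 R3).
  destruct (Hrho z w n ltac:(lra)) as (Hr1 & Hr2 & _).
  replace (3 * tau) with (tau + 2 * tau) by ring.
  apply vn_step_vs_h; try lra.
  - apply Hgap. pose proof (Zn_escapes z w ltac:(lra) n). lra.
  - intros j m Hj Hm He. eapply Rle_trans; [apply (Cmul_near1 _ _ t (tau / 3))|lra].
    + rewrite <- RtoC_minus, Cmod_R. exact Hr1.
    + lra.
    + apply Hfac; auto. lra.
Qed.

Lemma orbit_shadowing M k : forall eps, 0 < eps -> exists R, Rbig <= R /\
  forall z th w, R <= Cmod z -> is_arg z th -> Cmod (vn z th w 0) <= M ->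
  Cmod (vn z th w k - Nat.iter k heval (vn z th w 0)) <= eps.
Proof.
  pose proof pmass_ge1. pose proof qmass_ge1. induction k as [|k IH]; intros eps Heps.
  - exists Rbig. split; [lra|]. intros. simpl.
    replace (vn z th w 0 - vn z th w 0)%C with (RtoC 0) by ring. rewrite Cmod_0. lra.
  - set (B := h_orbit_bound M k + 1). pose proof (h_orbit_bound_ge1 M k).
    assert (HB1 : 1 <= B) by (unfold B; lra). assert (HB : 1 <= B ^ d) by (apply pow_R1_Rle; lra).
    set (L := qmass * (INR d * B ^ d)).
    assert (HL : 0 <= L) by (apply Rmult_le_pos; [lra|apply Rmult_le_pos; [apply pos_INR|lra]]).
    set (e1 := Rmin 1 (eps / (2 * (L + 1)))).
    assert (He1 : 0 < e1) by (apply Rmin_glb_lt; [lra|apply Rdiv_lt_0_compat; lra]).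
    assert (e1 <= 1) by apply Rmin_l. assert (He1L : e1 <= eps / (2 * (L + 1))) by apply Rmin_r.
    set (tau := eps / (6 * qmass * B ^ d)).
    assert (Htau : 0 < tau) by (apply Rdiv_lt_0_compat; [lra|nra]).
    destruct (IH e1 He1) as [R1 [HR1 Hshadow]].
    destruct (vn_follows_h k tau Htau) as [R2 [HR2 Hstep]].
    exists (Rmax R1 R2). split; [eapply Rle_trans; [exact HR1|apply Rmax_l]|].
    intros z th w Hz Harg Hc. pose proof (Rmax_l R1 R2). pose proof (Rmax_r R1 R2).
    specialize (Hshadow z th w ltac:(lra) Harg Hc). specialize (Hstep z th w ltac:(lra) Harg).
    pose proof (h_orbit_bounded M (vn z th w 0) k Hc) as Hhk.
    set (vk := vn z th w k) in *. set (hk := Nat.iter k heval (vn z th w 0)) in *.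
    assert (Hhk' : Cmod hk <= B) by (unfold B; lra).
    assert (Hvk : Cmod vk <= B).
    { pose proof (Cmod_triangle hk (vk - hk)). replace (hk + (vk - hk))%C with vk in H5 by ring.
      unfold B. lra. }
    assert (Step : Cmod (vn z th w (S k) - heval vk) <= eps / 2).
    { eapply Rle_trans; [exact Hstep|].
      assert (Rmax 1 (Cmod vk) ^ d <= B ^ d)
        by (apply pow_incr; split; [pose proof (Rmax_l 1 (Cmod vk)); lra|apply Rmax_lub; lra]).
      replace (eps / 2) with (qmass * (3 * tau * B ^ d)) by (unfold tau; field; lra).
      apply Rmult_le_compat_l; [lra|]. apply Rmult_le_compat_l; lra. }
    assert (Prop_err : Cmod (heval vk - heval hk) <= eps / 2).
    { eapply Rle_trans; [apply (h_lipschitz _ _ B); lra|]. fold L.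
      apply Rle_trans with (L * (eps / (2 * (L + 1)))); [apply Rmult_le_compat_l; lra|].
      apply Rmult_le_reg_r with (2 * (L + 1)); [lra|].
      replace (L * (eps / (2 * (L + 1))) * (2 * (L + 1))) with (L * eps) by (field; lra). nra. }
    change (Nat.iter (S k) heval (vn z th w 0)) with (heval hk).
    pose proof (Cmod_triangle (vn z th w (S k) - heval vk) (heval vk - heval hk)).
    replace (vn z th w (S k) - heval vk + (heval vk - heval hk))%C with (vn z th w (S k) - heval hk)%C
      in H5 by ring.
    lra.
Qed.

(** ** Comparison of the two Green functions *)

Lemma green_diff_far z th w eg M tau : orbit_controlled z w eg ->
  (forall n, 2 * (qmass * eg) + Rabs (ln (rho z w n)) <= tau) ->
  8 * qmass <= M -> M <= Cmod (vn z th w 0) ->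
  Rabs (G_alpha delta N d pc qc alpha z w - G_h delta N d qc alpha (vn z th w 0)) <= 4 * qmass / M + tau.
Proof.
  intros Hc Htau HM HM0.
  pose proof (G_alpha_large z th w eg M tau Hc Htau HM HM0).
  pose proof (G_h_large (vn z th w 0) M HM HM0).
  replace (4 * qmass / M) with (2 * qmass / M + 2 * qmass / M) by (unfold Rdiv; ring).
  apply Rabs_le_between. apply Rabs_le_between in H, H0. lra.
Qed.

Lemma green_diff_near z th w eg k e : orbit_controlled z w eg ->
  Cmod (vn z th w k - Nat.iter k heval (vn z th w 0)) <= e ->
  Rabs (G_alpha delta N d pc qc alpha z w - G_h delta N d qc alpha (vn z th w 0))
  <= 2 * (green_error / INR d ^ k) + e.
Proof.
  intros Hc Hk.
  destruct (G_alpha_rate z th w eg Hc) as [_ Ga]. destruct (G_h_rate (vn z th w 0)) as [_ Gh].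
  specialize (Ga k). specialize (Gh k).
  assert (HdR : 2 <= INR d) by (apply (le_INR 2); lia).
  assert (Hp : 1 <= INR d ^ k) by (apply pow_R1_Rle; lra).
  assert (Hip : 0 < / INR d ^ k <= 1)
    by (split; [apply Rinv_0_lt_compat; lra|rewrite <- Rinv_1; apply Rinv_le_contravar; lra]).
  set (x := Cmod (vn z th w k)) in *. set (y := Cmod (Nat.iter k heval (vn z th w 0))) in *.
  assert (Hxy : Rabs (/ INR d ^ k * logplus x - / INR d ^ k * logplus y) <= e).
  { rewrite <- Rmult_minus_distr_l, Rabs_mult, (Rabs_right (/ INR d ^ k)) by lra.
    assert (Rabs (logplus x - logplus y) <= e).
    { eapply Rle_trans; [apply logplus_lipschitz; apply Cmod_ge_0|].
      eapply Rle_trans; [apply Cmod_reverse_triangle|exact Hk]. }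
    pose proof (Rabs_pos (logplus x - logplus y)). nra. }
  apply Rabs_le_between. apply Rabs_le_between in Ga, Gh, Hxy. lra.
Qed.

Lemma orbit_controlled_eventually eps : 0 < eps -> exists eg R, Rbig <= R /\
  forall z w, R <= Cmod z -> orbit_controlled z w eg /\
    forall n, 2 * (qmass * eg) + Rabs (ln (rho z w n)) <= eps / 16.
Proof.
  intros Heps. pose proof qmass_ge1.
  set (eg := Rmin (1 / (4 * qmass)) (eps / (64 * qmass))).
  assert (Heg : 0 < eg) by (apply Rmin_glb_lt; apply Rdiv_lt_0_compat; lra).
  assert (Heg1 : qmass * eg <= 1/4).
  { replace (1/4) with (qmass * (1 / (4 * qmass))) by (field; lra).
    apply Rmult_le_compat_l; [lra|apply Rmin_l]. }
  assert (Heg2 : qmass * eg <= eps / 64).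
  { replace (eps / 64) with (qmass * (eps / (64 * qmass))) by (field; lra).
    apply Rmult_le_compat_l; [lra|apply Rmin_r]. }
  destruct (gap_small_eventually eg Heg) as [Rg [HRg1 HRg]].
  set (tr := Rmin (1/2) (eps / 32)).
  assert (Htr : 0 < tr) by (apply Rmin_glb_lt; lra).
  assert (tr <= 1/2) by apply Rmin_l. assert (tr <= eps / 32) by apply Rmin_r.
  destruct (rho_uniform tr Htr) as [Rr [HRr1 HRr]].
  exists eg, (Rmax Rg Rr). split; [eapply Rle_trans; [exact HRr1|apply Rmax_r]|].
  intros z w Hz. pose proof (Rmax_l Rg Rr). pose proof (Rmax_r Rg Rr).
  assert (Hzb : Rbig <= Cmod z) by lra.
  assert (Hrho : forall n, Rabs (ln (rho z w n)) <= tr) by (intros n; apply (HRr z w n); lra).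
  split; [|intros n; specialize (Hrho n); lra].
  split; [auto|]. split; [lra|]. split; [auto|]. split.
  - intros n. apply HRg. pose proof (Zn_escapes z w Hzb n). lra.
  - intros n. specialize (Hrho n). lra.
Qed.

Lemma far_radius eps : 0 < eps -> exists M, 8 * qmass <= M /\ 4 * qmass / M <= eps / 8.
Proof.
  intros Heps. pose proof qmass_ge1. exists (Rmax (8 * qmass) (32 * qmass / eps)).
  set (M := Rmax (8 * qmass) (32 * qmass / eps)).
  assert (HM1 : 8 * qmass <= M) by apply Rmax_l. assert (32 * qmass / eps <= M) by apply Rmax_r.
  split; [auto|].
  apply Rmult_le_reg_r with (M * 8 / eps); [apply Rdiv_lt_0_compat; lra|].
  replace (4 * qmass / M * (M * 8 / eps)) with (32 * qmass / eps) by (field; split; lra).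
  replace (eps / 8 * (M * 8 / eps)) with M by (field; lra). lra.
Qed.

Theorem green_functions_close eps : 0 < eps ->
  exists Rad, 0 < Rad /\
    forall z w : Cx, Rad < Cnorm z -> forall theta, is_arg z theta ->
      Rabs (G_alpha delta N d pc qc alpha z w
            - G_h delta N d qc alpha (Cmul (zpow_branch alpha z theta) w)) < eps.
Proof.
  intros Heps. assert (HdR : 2 <= INR d) by (apply (le_INR 2); lia).
  destruct (orbit_controlled_eventually eps Heps) as (eg & Rc & HRc1 & Hcontrol).
  destruct (far_radius eps Heps) as (M & HM1 & HM2).
  (* [k] steps make the rate error of both Green functions below [eps / 4] *)
  destruct (geometric_small green_error (INR d) (eps / 4) HdR green_error_nonneg ltac:(lra)) as [k Hk].
  destruct (orbit_shadowing M k (eps / 4) ltac:(lra)) as [Rs [HRs1 HRs]].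
  exists (Rmax Rc Rs). pose proof pmass_ge1. unfold Rbig in HRs1.
  split; [pose proof (Rmax_r Rc Rs); lra|].
  intros z w Hz th Harg. rewrite Cnorm_Cmod in Hz.
  pose proof (Rmax_l Rc Rs). pose proof (Rmax_r Rc Rs).
  destruct (Hcontrol z w ltac:(lra)) as [Hc Htau].
  change (Cmul (zpow_branch alpha z th) w) with (vn z th w 0).
  destruct (Rle_dec M (Cmod (vn z th w 0))) as [Hfar|Hnear].
  - pose proof (green_diff_far z th w eg M (eps / 16) Hc Htau HM1 Hfar). lra.
  - pose proof (green_diff_near z th w eg k (eps / 4) Hc (HRs z th w ltac:(lra) Harg ltac:(lra))). lra.
Qed.

End SkewProduct.

Theorem proposition4p14
  (delta d gamma N : nat) (pc : nat -> Cx) (qc : nat -> nat -> Cx) (alpha : R)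
  (* p monic of degree delta >= 2 *)
  (Hdelta : (2 <= delta)%nat)
  (Hp_monic : pc delta = Cx1)
  (* q(z,w) = sum_{n<=N, m<=d} qc n m z^n w^m, deg_w q = d >= 2 *)
  (Hd : (2 <= d)%nat)
  (Hq_supp : forall n m, (N < n)%nat \/ (d < m)%nat -> qc n m = Cx0)
  (* leading coefficient b(z) = sum_n qc n d z^n is monic of degree gamma *)
  (Hb_monic : qc gamma d = Cx1)
  (Hb_deg : forall n, (gamma < n)%nat -> qc n d = Cx0)
  (* delta > d *)
  (Hdd : (d < delta)%nat)
  (* alpha = max { n/(delta-m) : qc n m <> 0 } *)
  (Halpha_ub : forall n m, qc n m <> Cx0 -> INR n / (INR delta - INR m) <= alpha)
  (Halpha_att : exists n m, qc n m <> Cx0 /\ INR n / (INR delta - INR m) = alpha)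
  (* alpha = gamma / (delta - d) *)
  (Halpha_eq : alpha = INR gamma / (INR delta - INR d))
  (* f is not a polynomial product: q depends on z *)
  (Hnotprod : exists n m, (1 <= n)%nat /\ qc n m <> Cx0) :
  forall eps, 0 < eps ->
  exists Rad, 0 < Rad /\
    forall z w : Cx, Rad < Cnorm z ->
      forall theta, is_arg z theta ->
        Rabs (G_alpha delta N d pc qc alpha z w
              - G_h delta N d qc alpha (Cmul (zpow_branch alpha z theta) w)) < eps.
Proof.
  intros eps Heps.
  exact (green_functions_close delta d gamma N pc qc alpha Hp_monic Hd Hq_supp Hb_monic Hdd
           Halpha_ub Halpha_eq eps Heps).
Qed.
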